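(* Let $L'=\{E,H,\leq\}$ where $E$ is binary, $H$ is ternary and $\leq$ is binary. Let $\mathbf F$ be the $\{E,H\}$-structure with vertex set $\{0,1,2,3\}$, $E^{\mathbf F}=\{(1,0),(1,2),(1,3)\}$ and $H^{\mathbf F}=\{(0,2,3)\}$, and let $\mathbf F'$ be its expansion to an $L'$-structure by the natural order of vertices. Let $\mathcal K$ be the class of all enumerated $L'$-structures $\mathbf A$ for which there is no monomorphism $\mathbf F\to\mathbf A$. Then $\mathcal K$ does not have the type-respecting amalgamation property.
   Context: A monomorphism is an injective map preserving the relations $E$ and $H$ (not necessarily reflecting them). In all $L'$-structures $\leq$ is a linear order, finite or of type $\omega$; an enumerated structure has underlying set an ordinal $|A|$ ordered by $\leq$; embeddings are monotone, injective, and preserve and reflect all relations. $\mathbf A({<}v)$ is the substructure on $\{a<v\}$ (an initial segment). Weak types: $L'^f$ is $L'$ plus a unary partial function $f$. An $L'^f$-structure $\mathbf T$ is a weak type of level $\ell$ if $T=\{0,\dots,\ell-1,t_0,t_1,\dots\}$; every tuple in every relation $R^{\mathbf T}$, $R\in L'$, meets $\{t_0,t_1,\dots\}$ in a set $\{t_i:i<k\}$ and meets $\{0,\dots,\ell-1\}$; and $f(t_i)=t_{i-1}$ ($i>0$), $f(t_0)=t_0$, $f$ undefined otherwise. An increasing tuple $(a_0,\dots,a_{k-1})$ of vertices of $A\setminus\ell$ in an enumerated $\mathbf A$ has type $\mathbf T$ on level $\ell$ if the map $h$ (identity on $\ell$, $t_i\mapsto a_i$) satisfies $\vec b\in R^{\mathbf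 T}\iff h(\vec b)\in R^{\mathbf A}$ for all $R\in L'$ and all tuples $\vec b$ from $\{0,\dots,\ell-1,t_0,\dots,t_{k-1}\}$ meeting the type vertices in an initial segment and meeting $\{0,\dots,\ell-1\}$. $\mathbf T$ extends $\mathbf A$ if $\mathbf T$ minus its type vertices is $\mathbf A$; $\mathbf T,\mathbf T'$ agree as $n$-types if they coincide on $A\cup\{t_0,\dots,t_{n-1}\}$. For finite enumerated $\mathbf A$, $\mathbf A^+$ is the disjoint union of all weak types extending $\mathbf A$, with all copies of $\mathbf A$ identified and the copies of $t_i$ in $\mathbf T,\mathbf T'$ identified whenever $\mathbf T,\mathbf T'$ agree as $(i+1)$-types. An embedding $h:\mathbf A\to\mathbf B$ is type-respecting if for each $v\in A$ there is an embedding $h^v:\mathbf A({<}v)^+\to\mathbf B({<}h(v))^+$ whose image contains all weak types on level $h(v)$ of tuples of vertices of $h[A]$. For finite enumerated $\mathbf A,\mathbf B$, $h:\mathbf A^+\to\mathbf B^+$ is type-respecting (resp. $\mathcal K$-type-respecting) if for every $\mathbf A'$ (resp. $\mathbf A'\in\mathcal K$) with initial segment $\mathbf A$ there are $\mathbf B'$ (resp. $\mathbf B'\in\mathcal K$) with initial segment $\mathbf B$ and a type-respecting embedding $g:\mathbf A'\to\mathbf B'$ with $g\restriction A=h\restriction A$ and with every weak type in $\mathbf B'$ of level $g(\max A)$ of a tuple of vertices of $g[A']$ lying in $h[A^+]$. A hereditary class $\mathcal K$ of enumerated structures has the type-respecting amalgamation property if for all finite enumerated $\mathbf A,\mathbf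 B,\mathbf B'\in\mathcal K$ with $B'\setminus B=\{\max B'\}$ and $\mathbf B'\restriction B=\mathbf B$, all $\mathcal K$-type-respecting $f:\mathbf A^+\to\mathbf B^+$, $f':\mathbf A^+\to\mathbf B'^+$ and every type-respecting $g:\mathbf B^+\to\mathbf B'^+$ with $g\restriction B=\mathrm{Id}$ and $g\circ f=f'$, there is a $\mathcal K$-type-respecting $g':\mathbf B^+\to\mathbf B'^+$ with $g'\circ f=f'$ and $g'\restriction B=\mathrm{Id}$. *)

From mathcomp Require Import all_boot.
Set Implicit Arguments. Unset Strict Implicit. Unset Printing Implicit Defensive.

(* The underlying set is an ordinal: {0,...,n-1} (esz = Some n) or     *)
(* omega (esz = None); <= is always the natural order on that set.     *)
(* Relations are only read on the underlying set.                      *)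
Record estr := EStr {
  esz : option nat;
  eE : nat -> nat -> Prop;
  eH : nat -> nat -> nat -> Prop }.

Definition dom (A : estr) (x : nat) : Prop :=
  match esz A with Some n => x < n | None => True end.

Definition relE (A : estr) x y := [/\ dom A x, dom A y & eE A x y].
Definition relH (A : estr) x y z := [/\ dom A x, dom A y, dom A z & eH A x y z].
Definition relL (A : estr) x y := [/\ dom A x, dom A y & x <= y].

Record fstr := FStr {
  fn : nat;
  fE : nat -> nat -> Prop;
  fH : nat -> nat -> nat -> Prop }.

Definition to_estr (A : fstr) : estr := EStr (Some (fn A)) (fE A) (fH A).

Definition initseg (A : estr) (v : nat) : fstr := FStr v (eE A) (eH A).

Definition initseg_of (A : fstr) (A' : estr) : Prop :=
  [/\ forall x, x < fn A -> dom A' x,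
      forall x y, x < fn A -> y < fn A -> (eE A' x y <-> fE A x y) &
      forall x y z, x < fn A -> y < fn A -> z < fn A ->
        (eH A' x y z <-> fH A x y z)].

Definition emb (A B : estr) (h : nat -> nat) : Prop :=
  [/\ forall x, dom A x -> dom B (h x),
      forall x y, dom A x -> dom A y -> h x = h y -> x = y,
      forall x y, dom A x -> dom A y -> (relL A x y <-> relL B (h x) (h y)),
      forall x y, dom A x -> dom A y -> (relE A x y <-> relE B (h x) (h y)) &
      forall x y z, dom A x -> dom A y -> dom A z ->
        (relH A x y z <-> relH B (h x) (h y) (h z))].

(* Weak types.  On level n, a tuple of vertices of {0..n-1, t_0, ...} *)
(* is coded by naturals: a < n is a base vertex, n + i is t_i.          *)
(* adm n vs : vs meets {0..n-1} and meets the type vertices in a       *)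
(* nonempty initial segment {t_i : i < k}.  (Tuples meeting no type    *)
(* vertex are those of the base structure A itself.)                   *)
Definition adm (n : nat) (vs : seq nat) : bool :=
  [&& has (fun x => x < n) vs, has (fun x => n <= x) vs &
      all (fun x => (n <= x) ==> ((x == n) || (x.-1 \in vs))) vs].

(* the (j+1)-type part of a weak type extending a structure of size n: *)
(* its relations on tuples (meeting the type vertices) over            *)
(* {0,...,n-1,t_0,...,t_j}, stored canonically as finite sets of       *)
(* admissible tuples of 'I_(n + j.+1).                                  *)
Definition V (n j : nat) := 'I_(n + j.+1).
Definition rawdata (n j : nat) :=
  ({set V n j * V n j} * {set V n j * V n j} * {set V n j * V n j * V n j})%type.
Definition wadm n j (d : rawdata n j) : bool :=
  [&& [forall p in d.1.1, adm n [:: val p.1; val p.2]],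
      [forall p in d.1.2, adm n [:: val p.1; val p.2]] &
      [forall p in d.2, adm n [:: val p.1.1; val p.1.2; val p.2]]].
Definition wdata (n j : nat) := {d : rawdata n j | wadm d}.

Definition memE n j (w : wdata n j) (x y : nat) : Prop :=
  exists p, p \in (sval w).1.1 /\ val p.1 = x /\ val p.2 = y.
Definition memL n j (w : wdata n j) (x y : nat) : Prop :=
  exists p, p \in (sval w).1.2 /\ val p.1 = x /\ val p.2 = y.
Definition memH n j (w : wdata n j) (x y z : nat) : Prop :=
  exists p, p \in (sval w).2 /\ [/\ val p.1.1 = x, val p.1.2 = y & val p.2 = z].

(* two weak types agree as (i+1)-types: they coincide on               *)
(* A u {t_0,...,t_i}                                                   *)
Definition agree n i j j' (w : wdata n j) (w' : wdata n j') : Prop :=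
  forall x y z, x < n + i.+1 -> y < n + i.+1 -> z < n + i.+1 ->
    [/\ memE w x y <-> memE w' x y,
        memL w x y <-> memL w' x y &
        memH w x y z <-> memH w' x y z].

(* Type vertices of A^+ : the class of t_j in a weak type T is         *)
(* represented canonically by (j, the (j+1)-type part of T).           *)
Definition nodes (n : nat) := {j : nat & wdata n j}.

(* L'^f-structures (f a unary partial function, given by its graph).    *)
Record lfs := LFS {
  car : Type;
  rE : car -> car -> Prop;
  rL : car -> car -> Prop;
  rH : car -> car -> car -> Prop;
  rf : car -> car -> Prop }.
Arguments rE : clear implicits.
Arguments rL : clear implicits.
Arguments rH : clear implicits.
Arguments rf : clear implicits.

Definition lfs_emb (X Y : lfs) (h : car X -> car Y) : Prop :=
  injective h /\
  [/\ forall x y, rE X x y <-> rE Y (h x) (h y),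
      forall x y, rL X x y <-> rL Y (h x) (h y),
      forall x y z, rH X x y z <-> rH Y (h x) (h y) (h z),
      forall x y, rf X x y -> rf Y (h x) (h y) &
      forall x, (exists z, rf Y (h x) z) -> exists y, rf X x y].

Section Plus.
Variable A : fstr.
Local Notation n := (fn A).
Definition pcar := ('I_n + nodes n)%type.

Definition pcode (x : pcar) : nat :=
  match x with inl a => val a | inr N => n + projT1 N end.

(* x is (a copy of) a vertex of the weak type whose (i+1)-type is w *)
Definition belongs i (w : wdata n i) (x : pcar) : Prop :=
  match x with
  | inl _ => True
  | inr N => projT1 N <= i /\ agree (projT1 N) (projT2 N) w
  end.

Definition pE (x y : pcar) : Prop :=
  (exists a b, [/\ x = inl a, y = inl b & fE A (val a) (val b)]) \/
  (exists i (w : wdata n i), [/\ belongs w x, belongs w y & memE w (pcode x) (pcode y)]).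
Definition pL (x y : pcar) : Prop :=
  (exists a b, [/\ x = inl a, y = inl b & val a <= val b]) \/
  (exists i (w : wdata n i), [/\ belongs w x, belongs w y & memL w (pcode x) (pcode y)]).
Definition pH (x y z : pcar) : Prop :=
  (exists a b c, [/\ x = inl a, y = inl b, z = inl c & fH A (val a) (val b) (val c)]) \/
  (exists i (w : wdata n i),
     [/\ belongs w x, belongs w y, belongs w z & memH w (pcode x) (pcode y) (pcode z)]).
(* f(t_0) = t_0, f(t_{i+1}) = t_i, undefined on A *)
Definition pf (x y : pcar) : Prop :=
  match x, y with
  | inr N, inr M =>
      (projT1 N = 0 /\ M = N) \/
      (projT1 N = (projT1 M).+1 /\ agree (projT1 M) (projT2 M) (projT2 N))
  | _, _ => False
  end.

Definition plus : lfs := LFS pE pL pH pf.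
End Plus.

(* Weak type on level l of an increasing tuple as of vertices >= l of X:*)
(* typeNode X l as N  <->  N is the vertex t_j (j < size as) of that    *)
(* weak type, seen as a vertex of X(<l)^+.                              *)
Definition tmap (l : nat) (as_ : seq nat) (u : nat) : nat :=
  if u < l then u else nth 0 as_ (u - l).

Definition typeNode (X : estr) (l : nat) (as_ : seq nat) (N : nodes l) : Prop :=
  projT1 N < size as_ /\
  forall x y z, x < l + (projT1 N).+1 -> y < l + (projT1 N).+1 ->
                z < l + (projT1 N).+1 ->
   [/\ adm l [:: x; y] -> (memE (projT2 N) x y <-> relE X (tmap l as_ x) (tmap l as_ y)),
       adm l [:: x; y] -> (memL (projT2 N) x y <-> relL X (tmap l as_ x) (tmap l as_ y)) &
       adm l [:: x; y; z] -> (memH (projT2 N) x y z <->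
                              relH X (tmap l as_ x) (tmap l as_ y) (tmap l as_ z))].

Arguments typeNode : clear implicits.

Definition tuple_in_image (A X : estr) (g : nat -> nat) (l : nat) (as_ : seq nat) :=
  sorted ltn as_ /\
  forall a, a \in as_ -> l <= a /\ exists x, dom A x /\ g x = a.

Definition type_resp (A B : estr) (h : nat -> nat) : Prop :=
  emb A B h /\
  forall v, dom A v ->
    exists hv : car (plus (initseg A v)) -> car (plus (initseg B (h v))),
      lfs_emb hv /\
      forall as_, tuple_in_image A B h (h v) as_ ->
        forall N : nodes (h v), typeNode B (h v) as_ N -> exists y, hv y = inr N.

(* The weak types of tuples of g[A'] are taken over B, i.e. on level    *)
(* |B|.                                                  *)
Definition Ktype_resp (K : estr -> Prop) (A B : fstr)
    (h : car (plus A) -> car (plus B)) : Prop :=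
  lfs_emb h /\
  forall A' : estr, K A' -> initseg_of A A' ->
    exists (B' : estr) (g : nat -> nat),
      [/\ K B', initseg_of B B', type_resp A' B' g,
          forall a : 'I_(fn A), exists b : 'I_(fn B), h (inl a) = inl b /\ g (val a) = val b &
          forall as_, tuple_in_image A' B' g (fn B) as_ ->
            forall N : nodes (fn B), typeNode B' (fn B) as_ N ->
              exists y, h y = inr N].

Definition fixes_base (B B' : fstr) (g : car (plus B) -> car (plus B')) : Prop :=
  forall b : 'I_(fn B), exists b' : 'I_(fn B'), g (inl b) = inl b' /\ val b' = val b.

Definition tr_amalgamation (K : estr -> Prop) : Prop :=
  forall A B B' : fstr,
    K (to_estr A) -> K (to_estr B) -> K (to_estr B') ->
    fn B' = (fn B).+1 ->
    (forall x y, x < fn B -> y < fn B -> (fE B' x y <-> fE B x y)) ->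
    (forall x y z, x < fn B -> y < fn B -> z < fn B -> (fH B' x y z <-> fH B x y z)) ->
    forall (f : car (plus A) -> car (plus B)) (f' : car (plus A) -> car (plus B'))
           (g : car (plus B) -> car (plus B')),
      Ktype_resp K f -> Ktype_resp K f' ->
      Ktype_resp (fun _ => True) g -> fixes_base g ->
      (forall x, g (f x) = f' x) ->
      exists g' : car (plus B) -> car (plus B'),
        [/\ Ktype_resp K g', forall x, g' (f x) = f' x & fixes_base g'].

Definition FE (x y : nat) : Prop := (x = 1 /\ y = 0) \/ (x = 1 /\ y = 2) \/ (x = 1 /\ y = 3).
Definition FH (x y z : nat) : Prop := x = 0 /\ y = 2 /\ z = 3.

Definition mono_F (A : estr) (m : nat -> nat) : Prop :=
  [/\ forall x, x < 4 -> dom A (m x),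
      forall x y, x < 4 -> y < 4 -> m x = m y -> x = y,
      forall x y, FE x y -> relE A (m x) (m y) &
      forall x y z, FH x y z -> relH A (m x) (m y) (m z)].

Definition Kclass (A : estr) : Prop := ~ exists m, mono_F A m.

(* Take A = one vertex, B = two vertices, and B' = B plus a vertex 2 with the
   single edge 2 E 1.  Let f : A^+ -> B^+, f' : A^+ -> B'^+ and g : B^+ -> B'^+
   insert fresh vertices right after the base (f inserts 1, f' inserts 1 and 2,
   g inserts 2), the fresh vertex 2 copying the E-edge from 0 to the type vertex
   t_0.  These maps are K-type-respecting, the witnessing extension inserting the
   same fresh vertices, and g o f = f'.
   Let g' : B^+ -> B'^+ be K-type-respecting with g' o f = f', and test it on the
   extension D of B by vertices 2, 3 with edges 0 E 2, 0 E 3 and H(1, 2, 3), which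
   contains no copy of F.  For the resulting B'' and h : D -> B'', the 1-type over
   B' of h(z), z = 2, 3, lies in the image of g'.  As g' fixes B, its preimage is
   the type of z over {0, 1}, that is f(tau) where tau is the type "0 E t_0"; so it
   is f'(tau) and 2 E h(z) holds in B''.  Together with 2 E 1 and H(1, h 2, h 3)
   this is a copy of F in B'', contradicting B'' in K. *)

From mathcomp Require Import all_boot zify.
From Stdlib Require Import ClassicalEpsilon.
Set Implicit Arguments. Unset Strict Implicit. Unset Printing Implicit Defensive.

(** * Weak-type data as boolean relations *)

Section WeakTypeData.
Variables n j : nat.
Implicit Types w : wdata n j.

Definition mem2b (S : {set V n j * V n j}) x y :=
  [exists q in S, (val q.1 == x) && (val q.2 == y)].
Definition mem3b (S : {set V n j * V n j * V n j}) x y z :=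
  [exists q in S, [&& val q.1.1 == x, val q.1.2 == y & val q.2 == z]].

Definition wE w := mem2b (sval w).1.1.
Definition wL w := mem2b (sval w).1.2.
Definition wH w := mem3b (sval w).2.

Lemma wEP w x y : reflect (memE w x y) (wE w x y).
Proof.
apply: (iffP existsP) => [[q /and3P[qS /eqP <- /eqP <-]]|[q [qS [<- <-]]]].
  by exists q.
by exists q; rewrite qS !eqxx.
Qed.

Lemma wLP w x y : reflect (memL w x y) (wL w x y).
Proof.
apply: (iffP existsP) => [[q /and3P[qS /eqP <- /eqP <-]]|[q [qS [<- <-]]]].
  by exists q.
by exists q; rewrite qS !eqxx.
Qed.

Lemma wHP w x y z : reflect (memH w x y z) (wH w x y z).
Proof.
apply: (iffP existsP) => [[q /and4P[qS /eqP <- /eqP <- /eqP <-]]|[q [qS [<- <- <-]]]].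
  by exists q.
by exists q; rewrite qS !eqxx.
Qed.

Lemma wE_dom w x y :
  wE w x y -> [&& x < n + j.+1, y < n + j.+1 & adm n [:: x; y]].
Proof.
case: w => [[[E L] H] hw]; rewrite /wE /=; move: hw => /and3P[/forallP admE _ _].
case/existsP=> q /and3P[qE /eqP <- /eqP <-].
by have := admE q; rewrite qE !ltn_ord.
Qed.

Lemma wL_dom w x y :
  wL w x y -> [&& x < n + j.+1, y < n + j.+1 & adm n [:: x; y]].
Proof.
case: w => [[[E L] H] hw]; rewrite /wL /=; move: hw => /and3P[_ /forallP admL _].
case/existsP=> q /and3P[qL /eqP <- /eqP <-].
by have := admL q; rewrite qL !ltn_ord.
Qed.

Lemma wH_dom w x y z :
  wH w x y z -> [&& x < n + j.+1, y < n + j.+1, z < n + j.+1 & adm n [:: x; y; z]].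
Proof.
case: w => [[[E L] H] hw]; rewrite /wH /=; move: hw => /and3P[_ _ /forallP admH].
case/existsP=> q /and4P[qH /eqP <- /eqP <- /eqP <-].
by have := admH q; rewrite qH !ltn_ord.
Qed.

Lemma andb_wE_dom w x y :
  [&& x < n + j.+1, y < n + j.+1, adm n [:: x; y] & wE w x y] = wE w x y.
Proof. by apply/idP/idP => [/and4P[]//|h]; case/and3P: (wE_dom h) => -> -> ->. Qed.

Lemma andb_wL_dom w x y :
  [&& x < n + j.+1, y < n + j.+1, adm n [:: x; y] & wL w x y] = wL w x y.
Proof. by apply/idP/idP => [/and4P[]//|h]; case/and3P: (wL_dom h) => -> -> ->. Qed.

Lemma andb_wH_dom w x y z :
  [&& x < n + j.+1, y < n + j.+1, z < n + j.+1, adm n [:: x; y; z] & wH w x y z] =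
  wH w x y z.
Proof. by apply/idP/idP => [/and5P[]//|h]; case/and4P: (wH_dom h) => -> -> -> ->. Qed.

Lemma mem2bE (S : {set V n j * V n j}) q : (q \in S) = mem2b S (val q.1) (val q.2).
Proof.
apply/idP/existsP => [qS|[[a b] /and3P[qS /eqP ea /eqP eb]]]; first by exists q; rewrite qS !eqxx.
by case: q ea eb => a' b' /= /val_inj <- /val_inj <-.
Qed.

Lemma mem3bE (S : {set V n j * V n j * V n j}) q :
  (q \in S) = mem3b S (val q.1.1) (val q.1.2) (val q.2).
Proof.
apply/idP/existsP => [qS|[[[a b] c] /and4P[qS /eqP ea /eqP eb /eqP ec]]].
  by exists q; rewrite qS !eqxx.
by case: q ea eb ec => [[a' b'] c'] /= /val_inj <- /val_inj <- /val_inj <-.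
Qed.

Lemma wdata_ext w w' :
  wE w =2 wE w' -> wL w =2 wL w' -> (forall x y z, wH w x y z = wH w' x y z) -> w = w'.
Proof.
move=> eqE eqL eqH; apply: val_inj.
case: w w' eqE eqL eqH => [[[E L] H] ?] [[[E' L'] H'] ?]; rewrite /wE /wL /wH /= => eqE eqL eqH.
by congr (_, _, _); apply/setP => q; rewrite ?mem2bE ?mem3bE.
Qed.

Lemma wdata_ext_dom w w' :
  (forall x y, x < n + j.+1 -> y < n + j.+1 -> adm n [:: x; y] ->
     wE w x y = wE w' x y /\ wL w x y = wL w' x y) ->
  (forall x y z, x < n + j.+1 -> y < n + j.+1 -> z < n + j.+1 -> adm n [:: x; y; z] ->
     wH w x y z = wH w' x y z) ->
  w = w'.
Proof.
move=> eq2 eq3; apply: wdata_ext => [x y|x y|x y z].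
- have [/and3P[hx hy ha]|out] := boolP [&& x < n + j.+1, y < n + j.+1 & adm n [:: x; y]].
    exact: (eq2 x y hx hy ha).1.
  by rewrite (negbTE (contra (@wE_dom w x y) out)) (negbTE (contra (@wE_dom w' x y) out)).
- have [/and3P[hx hy ha]|out] := boolP [&& x < n + j.+1, y < n + j.+1 & adm n [:: x; y]].
    exact: (eq2 x y hx hy ha).2.
  by rewrite (negbTE (contra (@wL_dom w x y) out)) (negbTE (contra (@wL_dom w' x y) out)).
have [/and4P[hx hy hz ha]|out] :=
  boolP [&& x < n + j.+1, y < n + j.+1, z < n + j.+1 & adm n [:: x; y; z]].
  exact: eq3.
by rewrite (negbTE (contra (@wH_dom w x y z) out)) (negbTE (contra (@wH_dom w' x y z) out)).
Qed.

Definition wraw_of (PE PL : nat -> nat -> bool) (PH : nat -> nat -> nat -> bool) : rawdata n j :=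
  ([set q : V n j * V n j | adm n [:: val q.1; val q.2] && PE (val q.1) (val q.2)],
   [set q : V n j * V n j | adm n [:: val q.1; val q.2] && PL (val q.1) (val q.2)],
   [set q : V n j * V n j * V n j |
      adm n [:: val q.1.1; val q.1.2; val q.2] && PH (val q.1.1) (val q.1.2) (val q.2)]).

Lemma wadm_wraw_of PE PL PH : wadm (wraw_of PE PL PH).
Proof. by apply/and3P; split; apply/forallP => q; apply/implyP; rewrite inE => /andP[]. Qed.

Definition wdata_of PE PL PH : wdata n j := exist (@wadm n j) _ (wadm_wraw_of PE PL PH).

Lemma wE_of PE PL PH x y :
  wE (wdata_of PE PL PH) x y = [&& x < n + j.+1, y < n + j.+1, adm n [:: x; y] & PE x y].
Proof.
apply/existsP/idP => [[q]|/and4P[hx hy ha hP]].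
  by rewrite inE => /and3P[/andP[ha hP] /eqP <- /eqP <-]; rewrite !ltn_ord ha hP.
by exists (Ordinal hx, Ordinal hy); rewrite inE /= ha hP !eqxx.
Qed.

Lemma wL_of PE PL PH x y :
  wL (wdata_of PE PL PH) x y = [&& x < n + j.+1, y < n + j.+1, adm n [:: x; y] & PL x y].
Proof.
apply/existsP/idP => [[q]|/and4P[hx hy ha hP]].
  by rewrite inE => /and3P[/andP[ha hP] /eqP <- /eqP <-]; rewrite !ltn_ord ha hP.
by exists (Ordinal hx, Ordinal hy); rewrite inE /= ha hP !eqxx.
Qed.

Lemma wH_of PE PL PH x y z :
  wH (wdata_of PE PL PH) x y z =
  [&& x < n + j.+1, y < n + j.+1, z < n + j.+1, adm n [:: x; y; z] & PH x y z].
Proof.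
apply/existsP/idP => [[q]|/and5P[hx hy hz ha hP]].
  by rewrite inE => /and4P[/andP[ha hP] /eqP <- /eqP <- /eqP <-]; rewrite !ltn_ord ha hP.
by exists (Ordinal hx, Ordinal hy, Ordinal hz); rewrite inE /= ha hP !eqxx.
Qed.

End WeakTypeData.

Lemma agreeP n i j j' (w : wdata n j) (w' : wdata n j') :
  agree i w w' <->
  forall x y z, x < n + i.+1 -> y < n + i.+1 -> z < n + i.+1 ->
    [/\ wE w x y = wE w' x y, wL w x y = wL w' x y & wH w x y z = wH w' x y z].
Proof.
split=> h x y z hx hy hz; have [eqE eqL eqH] := h x y z hx hy hz; split.
- by apply/idP/idP => /wEP/eqE/wEP.
- by apply/idP/idP => /wLP/eqL/wLP.
- by apply/idP/idP => /wHP/eqH/wHP.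
- by split=> /wEP; [rewrite eqE|rewrite -eqE] => /wEP.
- by split=> /wLP; [rewrite eqL|rewrite -eqL] => /wLP.
- by split=> /wHP; [rewrite eqH|rewrite -eqH] => /wHP.
Qed.

Definition wrestr n j (w : wdata n j.+1) : wdata n j := wdata_of n j (wE w) (wL w) (wH w).

Lemma agree_wrestr n j (w : wdata n j.+1) : agree j (wrestr w) w.
Proof.
apply/agreeP => x y z hx hy hz; rewrite wE_of wL_of wH_of hx hy hz /=.
split; apply/andb_idl.
- by case/wE_dom/and3P.
- by case/wL_dom/and3P.
- by case/wH_dom/and4P.
Qed.

(** * Inserting fresh vertices *)

Definition ins p d x := if x < p then x else x + d.
Definition unins p d y := if y < p then y else y - d.
Definition fresh p d y := (p <= y) && (y < p + d).

Section Insertion.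
Variables p d : nat.

Lemma unins_ins x : unins p d (ins p d x) = x.
Proof. by rewrite /unins /ins; case: ifP; case: ifP; lia. Qed.

Lemma ins_unins y : ~~ fresh p d y -> ins p d (unins p d y) = y.
Proof. by rewrite /fresh /unins /ins; case: ifP; case: ifP; lia. Qed.

Lemma fresh_ins x : fresh p d (ins p d x) = false.
Proof. by rewrite /fresh /ins; case: ifP; lia. Qed.

Lemma ins_inj : injective (ins p d).
Proof. by move=> x y; rewrite /ins; case: ifP; case: ifP; lia. Qed.

Lemma leq_ins x y : (ins p d x <= ins p d y) = (x <= y).
Proof. by rewrite /ins; case: ifP; case: ifP; lia. Qed.

Lemma ins_id x : x < p -> ins p d x = x.
Proof. by rewrite /ins => ->. Qed.

Lemma ins_shift x : p <= x -> ins p d x = x + d.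
Proof. by rewrite /ins; case: ifP; lia. Qed.

Lemma ins_ltn n m k x : p <= n -> n + d = m -> (ins p d x < m + k) = (x < n + k).
Proof. by rewrite /ins; case: ifP; lia. Qed.

Lemma ins_geq n m x : p <= n -> n + d = m -> (m <= ins p d x) = (n <= x).
Proof. by rewrite /ins; case: ifP; lia. Qed.

Lemma unins_inj_old x y : ~~ fresh p d x -> ~~ fresh p d y -> unins p d x = unins p d y -> x = y.
Proof. by move=> /ins_unins ex /ins_unins ey exy; rewrite -ex -ey exy. Qed.

Lemma ins_ltn_base n m x : n + d = m -> x < n -> ins p d x < m.
Proof. by rewrite /ins; case: ifP; lia. Qed.

Lemma fresh_ltn n m u : p <= n -> n + d = m -> fresh p d u -> u < m.
Proof. by rewrite /fresh; lia. Qed.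

Variant ins_spec y : Prop :=
  | InsImage x of y = ins p d x
  | InsFresh of fresh p d y.

Lemma insP y : ins_spec y.
Proof.
by case: (boolP (fresh p d y)) => [|/ins_unins <-]; [exact: InsFresh|exact: InsImage].
Qed.

Lemma adm_ins n m s : p <= n -> n + d = m -> adm m (map (ins p d) s) = adm n s.
Proof.
move=> pn nm; rewrite /adm !has_map all_map.
congr [&& _, _ & _].
- by apply: eq_has => x /=; rewrite -[m]addn0 (ins_ltn _ _ pn nm) addn0.
- by apply: eq_has => x /=; rewrite (ins_geq _ pn nm).
apply: eq_all => x /=; rewrite (ins_geq _ pn nm); case: (leqP n x) => //= nx.
rewrite ins_shift -?nm ?eqn_add2r; last lia.
case: eqP => //= ne.
have -> : (x + d).-1 = ins p d x.-1 by rewrite ins_shift; lia.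
by rewrite mem_map //; apply: ins_inj.
Qed.

End Insertion.

Lemma ins_comp p d1 d2 x : ins (p + d1) d2 (ins p d1 x) = ins p (d1 + d2) x.
Proof. by rewrite /ins; case: (ltnP x p) => xp; [rewrite ltn_addr|case: ifP]; lia. Qed.

Lemma fresh0 p u : fresh p 0 u = false.
Proof. by rewrite /fresh; lia. Qed.

Lemma fresh_split p d1 d2 u : fresh p (d1 + d2) u = fresh p d1 u || fresh (p + d1) d2 u.
Proof. by rewrite /fresh; apply/idP/idP; [case/andP|case/orP => /andP[]]; lia. Qed.

Lemma adm_base_l n x y : x < n -> adm n [:: x; y] -> y = n.
Proof.
rewrite /adm /= => hx /and3P[_ + /and3P[_ + _]]; rewrite leqNgt hx /= orbF.
by case: (leqP n y) => //= hy _; rewrite !inE; case/or3P => /eqP //; lia.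
Qed.

Lemma adm_base_r n x y : y < n -> adm n [:: x; y] -> x = n.
Proof.
rewrite /adm /= => hy /and3P[_ + /and3P[+ _ _]]; rewrite (leqNgt n y) hy /= orbF.
by case: (leqP n x) => //= hx _; rewrite !inE; case/or3P => /eqP //; lia.
Qed.

Lemma adm_base_top n u : u < n -> adm n [:: u; n].
Proof. by move=> hu; rewrite /adm /= eqxx hu leqnn /= orbT andbT; apply/implyP; lia. Qed.

Lemma adm_top_base n u : u < n -> adm n [:: n; u].
Proof. by move=> hu; rewrite /adm /= eqxx hu leqnn /= orbT; apply/and3P; split=> //; lia. Qed.

Lemma adm_top n s : all (fun c => c <= n) s -> adm n s -> n \in s.
Proof.
move=> /allP sn /and3P[_ /hasP[c cs nc] _].
by have /eqP <- : c == n by rewrite eqn_leq nc sn.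
Qed.

Section BaseVertices.
Variables n j : nat.
Implicit Types w : wdata n j.

Lemma wE_base_l w x y : x < n -> y != n -> wE w x y = false.
Proof. by move=> xn yn; apply/negbTE/negP => /wE_dom/and3P[_ _ /(adm_base_l xn)]; apply/eqP. Qed.

Lemma wE_base_r w x y : y < n -> x != n -> wE w x y = false.
Proof. by move=> yn xn; apply/negbTE/negP => /wE_dom/and3P[_ _ /(adm_base_r yn)]; apply/eqP. Qed.

Lemma wL_base_l w x y : x < n -> y != n -> wL w x y = false.
Proof. by move=> xn yn; apply/negbTE/negP => /wL_dom/and3P[_ _ /(adm_base_l xn)]; apply/eqP. Qed.

Lemma wL_base_r w x y : y < n -> x != n -> wL w x y = false.
Proof. by move=> yn xn; apply/negbTE/negP => /wL_dom/and3P[_ _ /(adm_base_r yn)]; apply/eqP. Qed.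

End BaseVertices.

(* Fresh vertices lie below t_0 and in no H-tuple; a fresh u with cE u copies
   the E-edge from 0 to t_0. *)
Definition ins_wtype n m p d (cE : nat -> bool) j (w : wdata n j) : wdata m j :=
  wdata_of m j
    (fun x y => if fresh p d x then [&& y == m, cE x & wE w 0 n]
                else ~~ fresh p d y && wE w (unins p d x) (unins p d y))
    (fun x y => if fresh p d x then y == m
                else ~~ fresh p d y && wL w (unins p d x) (unins p d y))
    (fun x y z => [&& ~~ fresh p d x, ~~ fresh p d y, ~~ fresh p d z &
                      wH w (unins p d x) (unins p d y) (unins p d z)]).
Arguments ins_wtype {n} m p d cE {j} w.

Definition unins_wtype n m p d j (w : wdata m j) : wdata n j :=
  wdata_of n j (fun x y => wE w (ins p d x) (ins p d y))
               (fun x y => wL w (ins p d x) (ins p d y))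
               (fun x y z => wH w (ins p d x) (ins p d y) (ins p d z)).
Arguments unins_wtype n {m} p d {j} w.

Section InsertedWeakTypes.
Variables (n m p d : nat) (cE : nat -> bool).
Hypotheses (pn : p <= n) (nm : n + d = m).

Lemma adm2_ins x y : adm m [:: ins p d x; ins p d y] = adm n [:: x; y].
Proof. exact: (adm_ins [:: x; y] pn nm). Qed.

Lemma adm3_ins x y z : adm m [:: ins p d x; ins p d y; ins p d z] = adm n [:: x; y; z].
Proof. exact: (adm_ins [:: x; y; z] pn nm). Qed.

Lemma ins_top : ins p d n = m.
Proof. by rewrite ins_shift. Qed.

Lemma fresh_top : fresh p d m = false.
Proof. by rewrite -ins_top fresh_ins. Qed.

Section Image.
Variables (j : nat) (w : wdata n j).
Let W := ins_wtype m p d cE w.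

Lemma wE_ins_wtype x y : wE W (ins p d x) (ins p d y) = wE w x y.
Proof.
rewrite wE_of !fresh_ins !unins_ins !(ins_ltn _ _ pn nm) adm2_ins /=.
exact: andb_wE_dom.
Qed.

Lemma wL_ins_wtype x y : wL W (ins p d x) (ins p d y) = wL w x y.
Proof.
rewrite wL_of !fresh_ins !unins_ins !(ins_ltn _ _ pn nm) adm2_ins /=.
exact: andb_wL_dom.
Qed.

Lemma wH_ins_wtype x y z : wH W (ins p d x) (ins p d y) (ins p d z) = wH w x y z.
Proof.
rewrite wH_of !fresh_ins !unins_ins !(ins_ltn _ _ pn nm) adm3_ins /=.
exact: andb_wH_dom.
Qed.

Lemma wE_ins_wtype_fresh_top u : fresh p d u -> wE W u m = cE u && wE w 0 n.
Proof.
move=> fu; have um := fresh_ltn pn nm fu.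
rewrite wE_of fu eqxx adm_base_top //=.
have -> : u < m + j.+1 by lia.
by have -> : m < m + j.+1 by lia.
Qed.

Lemma wE_ins_wtype_top_fresh u : fresh p d u -> wE W m u = false.
Proof. by move=> fu; rewrite wE_of fresh_top fu !andbF. Qed.

Lemma wL_ins_wtype_fresh_top u : fresh p d u -> wL W u m.
Proof.
move=> fu; have um := fresh_ltn pn nm fu.
rewrite wL_of fu eqxx adm_base_top //=.
have -> : u < m + j.+1 by lia.
by have -> : m < m + j.+1 by lia.
Qed.

Lemma wL_ins_wtype_top_fresh u : fresh p d u -> wL W m u = false.
Proof. by move=> fu; rewrite wL_of fresh_top fu !andbF. Qed.

Lemma wH_ins_wtype_fresh x y z :
  fresh p d x || fresh p d y || fresh p d z -> wH W x y z = false.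
Proof.
by rewrite wH_of; case: (fresh p d x) (fresh p d y) (fresh p d z) => [] [] []; rewrite ?andbF.
Qed.

End Image.

Lemma wE_unins_wtype j (w : wdata m j) x y :
  wE (unins_wtype n p d w) x y = wE w (ins p d x) (ins p d y).
Proof.
rewrite wE_of; apply/idP/idP => [/and4P[] //|h].
by have /and3P[] := wE_dom h; rewrite !(ins_ltn _ _ pn nm) adm2_ins => -> -> ->.
Qed.

Lemma wL_unins_wtype j (w : wdata m j) x y :
  wL (unins_wtype n p d w) x y = wL w (ins p d x) (ins p d y).
Proof.
rewrite wL_of; apply/idP/idP => [/and4P[] //|h].
by have /and3P[] := wL_dom h; rewrite !(ins_ltn _ _ pn nm) adm2_ins => -> -> ->.
Qed.

Lemma wH_unins_wtype j (w : wdata m j) x y z :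
  wH (unins_wtype n p d w) x y z = wH w (ins p d x) (ins p d y) (ins p d z).
Proof.
rewrite wH_of; apply/idP/idP => [/and5P[] //|h].
by have /and4P[] := wH_dom h; rewrite !(ins_ltn _ _ pn nm) adm3_ins => -> -> -> ->.
Qed.

(* An admissible pair that meets the base also meets t_0, so a weak type over
   the enlarged base is determined by its values on images of [ins] and on the
   pairs joining fresh vertices to t_0. *)
Lemma wdata_eq_ins j (w1 w2 : wdata m j) :
  (forall x y, wE w1 (ins p d x) (ins p d y) = wE w2 (ins p d x) (ins p d y)) ->
  (forall x y, wL w1 (ins p d x) (ins p d y) = wL w2 (ins p d x) (ins p d y)) ->
  (forall x y z, wH w1 (ins p d x) (ins p d y) (ins p d z) =
                 wH w2 (ins p d x) (ins p d y) (ins p d z)) ->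
  (forall u, fresh p d u -> [/\ wE w1 u m = wE w2 u m, wE w1 m u = wE w2 m u,
                               wL w1 u m = wL w2 u m & wL w1 m u = wL w2 m u]) ->
  (forall x y z, fresh p d x || fresh p d y || fresh p d z -> wH w1 x y z = wH w2 x y z) ->
  w1 = w2.
Proof.
move=> eqE eqL eqH eq_fresh eqH_fresh; have fm := fresh_ltn pn nm.
apply: wdata_ext => [x y|x y|x y z].
- case: (insP p d x) => [x' ->|fx].
    case: (insP p d y) => [y' ->|fy]; first exact: eqE.
    have [->|xm] := eqVneq (ins p d x') m; first by case: (eq_fresh y fy).
    by rewrite !wE_base_r ?fm.
  have [->|ym] := eqVneq y m; first by case: (eq_fresh x fx).
  by rewrite !wE_base_l ?fm.
- case: (insP p d x) => [x' ->|fx].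
    case: (insP p d y) => [y' ->|fy]; first exact: eqL.
    have [->|xm] := eqVneq (ins p d x') m; first by case: (eq_fresh y fy).
    by rewrite !wL_base_r ?fm.
  have [->|ym] := eqVneq y m; first by case: (eq_fresh x fx).
  by rewrite !wL_base_l ?fm.
- case: (insP p d x) (insP p d y) (insP p d z) => [x' ->|fx] [y' ->|fy] [z' ->|fz];
    first exact: eqH.
  all: by apply: eqH_fresh; rewrite ?fx ?fy ?fz ?orbT.
Qed.

Lemma agree_ins_wtype i j j' (w : wdata n j) (w' : wdata n j') :
  i <= j -> i <= j' -> agree i w w' -> agree i (ins_wtype m p d cE w) (ins_wtype m p d cE w').
Proof.
move=> ij ij' /agreeP eqw; apply/agreeP => x y z hx hy hz.
have in_j u : u < m + i.+1 -> (u < m + j.+1) && (u < m + j'.+1) by lia.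
have unins_lt u : ~~ fresh p d u -> u < m + i.+1 -> unins p d u < n + i.+1.
  by move=> fu; rewrite -{1}(ins_unins fu) (ins_ltn _ _ pn nm).
have lt0 : 0 < n + i.+1 by lia.
have ltn : n < n + i.+1 by lia.
have [eq0 _ _] := eqw 0 n 0 lt0 ltn lt0.
rewrite !wE_of !wL_of !wH_of /=.
case/andP: (in_j x hx) => -> ->; case/andP: (in_j y hy) => -> ->.
case/andP: (in_j z hz) => -> -> /=.
case: (boolP (fresh p d x)) => fx; case: (boolP (fresh p d y)) => fy;
  case: (boolP (fresh p d z)) => fz; rewrite ?eq0 ?andbF //=.
all: try by have [-> -> _] := eqw _ _ _ (unins_lt x fx hx) (unins_lt y fy hy) (unins_lt x fx hx).
by have [-> -> ->] := eqw _ _ _ (unins_lt x fx hx) (unins_lt y fy hy) (unins_lt z fz hz).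
Qed.

Lemma agree_unins_wtype i j (w : wdata n i) (w' : wdata m j) :
  agree i (ins_wtype m p d cE w) w' -> agree i w (unins_wtype n p d w').
Proof.
move=> /agreeP eqw; apply/agreeP => x y z hx hy hz.
have ins_lt u : u < n + i.+1 -> ins p d u < m + i.+1 by rewrite (ins_ltn _ _ pn nm).
case: (eqw _ _ _ (ins_lt _ hx) (ins_lt _ hy) (ins_lt _ hz)).
by rewrite wE_ins_wtype wL_ins_wtype wH_ins_wtype wE_unins_wtype wL_unins_wtype wH_unins_wtype.
Qed.

Lemma ins_unins_wtype j (w : wdata m j) :
  (forall u, fresh p d u -> cE u -> 0 < p) ->
  (forall u, fresh p d u ->
     [/\ wE w u m = cE u && wE w 0 m, wE w m u = false, wL w u m & wL w m u = false]) ->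
  (forall x y z, fresh p d x || fresh p d y || fresh p d z -> wH w x y z = false) ->
  ins_wtype m p d cE (unins_wtype n p d w) = w.
Proof.
move=> cE_pos w_fresh wH_fresh.
apply: wdata_eq_ins => [x y|x y|x y z|u fu|x y z f3].
- by rewrite wE_ins_wtype wE_unins_wtype.
- by rewrite wL_ins_wtype wL_unins_wtype.
- by rewrite wH_ins_wtype wH_unins_wtype.
- have [-> -> -> ->] := w_fresh u fu.
  rewrite wE_ins_wtype_fresh_top // wE_ins_wtype_top_fresh // wL_ins_wtype_fresh_top //.
  rewrite wL_ins_wtype_top_fresh // wE_unins_wtype ins_top; split=> //.
  by case: (boolP (cE u)) => // /(cE_pos u fu) p0; rewrite ins_id.
- by rewrite wH_ins_wtype_fresh ?wH_fresh.
Qed.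

Lemma ins_wtypeK j : cancel (@ins_wtype n m p d cE j) (unins_wtype n p d).
Proof.
move=> w; apply: wdata_ext => [x y|x y|x y z].
- by rewrite wE_unins_wtype wE_ins_wtype.
- by rewrite wL_unins_wtype wL_ins_wtype.
- by rewrite wH_unins_wtype wH_ins_wtype.
Qed.

End InsertedWeakTypes.

Lemma ins_wtype_comp n m1 m p d1 d2 (cE1 cE2 cE : nat -> bool) j (w : wdata n j) :
  0 < p -> p <= n -> n + d1 = m1 -> m1 + d2 = m ->
  (forall u, fresh p d1 u -> cE1 u = cE u) -> (forall u, fresh (p + d1) d2 u -> cE2 u = cE u) ->
  ins_wtype m (p + d1) d2 cE2 (ins_wtype m1 p d1 cE1 w) = ins_wtype m p (d1 + d2) cE w.
Proof.
move=> p0 pn nm1 m1m cE1E cE2E.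
have pm1 : p + d1 <= m1 by lia.
have nm : n + (d1 + d2) = m by lia.
set W1 := ins_wtype m1 p d1 cE1 w.
have W1_0n : wE W1 0 m1 = wE w 0 n.
  by rewrite -(wE_ins_wtype cE1 pn nm1 w 0 n) ins_id // (ins_top pn nm1).
have em : ins (p + d1) d2 m1 = m := ins_top pm1 m1m.
apply: (wdata_eq_ins pn nm) => [x y|x y|x y z|u|x y z].
- by rewrite (wE_ins_wtype _ pn nm) -!ins_comp (wE_ins_wtype _ pm1 m1m) (wE_ins_wtype _ pn nm1).
- by rewrite (wL_ins_wtype _ pn nm) -!ins_comp (wL_ins_wtype _ pm1 m1m) (wL_ins_wtype _ pn nm1).
- by rewrite (wH_ins_wtype _ pn nm) -!ins_comp (wH_ins_wtype _ pm1 m1m) (wH_ins_wtype _ pn nm1).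
- move=> fu; rewrite (wE_ins_wtype_fresh_top _ pn nm) // (wE_ins_wtype_top_fresh _ pn nm) //.
  rewrite (wL_ins_wtype_fresh_top _ pn nm) // (wL_ins_wtype_top_fresh _ pn nm) //.
  move: fu; rewrite fresh_split => /orP[f1|f2].
    have eu : ins (p + d1) d2 u = u by rewrite ins_id //; move: f1; rewrite /fresh; lia.
    have -> : wE (ins_wtype m (p + d1) d2 cE2 W1) u m = wE W1 u m1.
      by rewrite -(wE_ins_wtype cE2 pm1 m1m) eu em.
    have -> : wE (ins_wtype m (p + d1) d2 cE2 W1) m u = wE W1 m1 u.
      by rewrite -(wE_ins_wtype cE2 pm1 m1m) eu em.
    have -> : wL (ins_wtype m (p + d1) d2 cE2 W1) u m = wL W1 u m1.
      by rewrite -(wL_ins_wtype cE2 pm1 m1m) eu em.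
    have -> : wL (ins_wtype m (p + d1) d2 cE2 W1) m u = wL W1 m1 u.
      by rewrite -(wL_ins_wtype cE2 pm1 m1m) eu em.
    rewrite (wE_ins_wtype_fresh_top _ pn nm1) // (wE_ins_wtype_top_fresh _ pn nm1) //.
    by rewrite (wL_ins_wtype_fresh_top _ pn nm1) // (wL_ins_wtype_top_fresh _ pn nm1) // cE1E.
  rewrite (wE_ins_wtype_fresh_top _ pm1 m1m) // (wE_ins_wtype_top_fresh _ pm1 m1m) //.
  by rewrite (wL_ins_wtype_fresh_top _ pm1 m1m) // (wL_ins_wtype_top_fresh _ pm1 m1m) // W1_0n cE2E.
- move=> f3; rewrite [RHS]wH_ins_wtype_fresh //.
  have [f2|] := boolP [|| fresh (p + d1) d2 x, fresh (p + d1) d2 y | fresh (p + d1) d2 z].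
    by rewrite wH_ins_wtype_fresh // -orbA.
  rewrite !negb_or => /and3P[fx fy fz].
  rewrite -(ins_unins fx) -(ins_unins fy) -(ins_unins fz) (wH_ins_wtype _ pm1 m1m).
  apply: wH_ins_wtype_fresh; move: f3 fx fy fz.
  by rewrite !fresh_split /unins /fresh; case: ifP; case: ifP; case: ifP; lia.
Qed.

Section InsertionPlus.
Variables (X Y : fstr) (p d : nat) (cE : nat -> bool).
Hypotheses (pX : p <= fn X) (XY : fn X + d = fn Y).

Definition ins_plus (x : car (plus X)) : car (plus Y) :=
  match x with
  | inl a => inl (Ordinal (ins_ltn_base p XY (ltn_ord a)))
  | inr N => inr (existT _ (projT1 N) (ins_wtype (fn Y) p d cE (projT2 N)))
  end.

Lemma pcode_ins_plus x : pcode (ins_plus x) = ins p d (pcode x).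
Proof. by case: x => [a|[k w]] //=; rewrite ins_shift; lia. Qed.

Lemma ins_plus_inl x (b : 'I_(fn Y)) :
  ins_plus x = inl b -> exists2 a : 'I_(fn X), x = inl a & val b = ins p d (val a).
Proof. by case: x => //= a [<-]; exists a. Qed.

Lemma belongs_ins_plus i (w : wdata (fn X) i) x :
  belongs w x -> belongs (ins_wtype (fn Y) p d cE w) (ins_plus x).
Proof. by case: x => [a|[k N]] //= [ki agN]; split=> //; apply: agree_ins_wtype. Qed.

Lemma belongs_unins_wtype i (w : wdata (fn Y) i) x :
  belongs w (ins_plus x) -> belongs (unins_wtype (fn X) p d w) x.
Proof. by case: x => [a|[k N]] //= [ki agN]; split=> //; apply: agree_unins_wtype agN. Qed.

Lemma ins_plus_inj : injective ins_plus.
Proof.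
case=> [a|[k w]] [b|[k' w']] //= => [[/ins_inj eab]|e]; first by congr inl; apply: val_inj.
move/(congr1 (fun x : car (plus Y) => if x is inr N then Some N else None))/Some_inj: e.
move=> e; have ek := congr1 tag e; simpl in ek; subst k'.
by have /(can_inj (@ins_wtypeK _ _ _ _ cE pX XY k)) -> := eq_from_Tagged e.
Qed.

Lemma ins_plus_pf x y : pf x y -> pf (ins_plus x) (ins_plus y).
Proof.
case: x y => [a|N] [b|M] //= [[N0 ->]|[NM agMN]]; first by left.
by right; split=> //; apply: agree_ins_wtype => //; lia.
Qed.

Lemma ins_plus_pf_dom x : (exists z, pf (ins_plus x) z) -> exists y, pf x y.
Proof.
case: x => [a|[[|k] w]] /=; first by case=> [[b|]].
  by exists (inr (existT _ 0 w)); left.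
by exists (inr (existT _ k (wrestr w))); right; split=> //; apply: agree_wrestr.
Qed.

Lemma ins_plus_pL x y : pL x y <-> pL (ins_plus x) (ins_plus y).
Proof.
split.
- case=> [[a [b [-> -> ab]]]|[i [w [bx bY /wLP ew]]]].
    by left; do 2 eexists; split; [reflexivity|reflexivity|rewrite /= leq_ins].
  right; exists i, (ins_wtype (fn Y) p d cE w); split; try exact: belongs_ins_plus.
  by apply/wLP; rewrite !pcode_ins_plus (wL_ins_wtype _ pX XY).
- case=> [[a' [b' [/ins_plus_inl[a -> ea] /ins_plus_inl[b -> eb] ab]]]|[i [w [bx bY /wLP ew]]]].
    by left; exists a, b; split=> //; move: ab; rewrite ea eb leq_ins.
  right; exists i, (unins_wtype (fn X) p d w); split; try exact: belongs_unins_wtype.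
  by apply/wLP; rewrite (wL_unins_wtype pX XY) -!pcode_ins_plus.
Qed.

Section Relations.
Hypothesis XY_E : forall a b, a < fn X -> b < fn X ->
  (fE X a b <-> fE Y (ins p d a) (ins p d b)).
Hypothesis XY_H : forall a b c, a < fn X -> b < fn X -> c < fn X ->
  (fH X a b c <-> fH Y (ins p d a) (ins p d b) (ins p d c)).

Lemma ins_plus_pE x y : pE x y <-> pE (ins_plus x) (ins_plus y).
Proof.
split.
- case=> [[a [b [-> -> ab]]]|[i [w [bx bY /wEP ew]]]].
    by left; do 2 eexists; split; [reflexivity|reflexivity|apply/XY_E].
  right; exists i, (ins_wtype (fn Y) p d cE w); split; try exact: belongs_ins_plus.
  by apply/wEP; rewrite !pcode_ins_plus (wE_ins_wtype _ pX XY).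
- case=> [[a' [b' [/ins_plus_inl[a -> ea] /ins_plus_inl[b -> eb] ab]]]|[i [w [bx bY /wEP ew]]]].
    by left; exists a, b; split=> //; apply/(XY_E (ltn_ord a) (ltn_ord b)); rewrite -ea -eb.
  right; exists i, (unins_wtype (fn X) p d w); split; try exact: belongs_unins_wtype.
  by apply/wEP; rewrite (wE_unins_wtype pX XY) -!pcode_ins_plus.
Qed.

Lemma ins_plus_pH x y z : pH x y z <-> pH (ins_plus x) (ins_plus y) (ins_plus z).
Proof.
split.
- case=> [[a [b [c [-> -> -> abc]]]]|[i [w [bx bY bz /wHP ew]]]].
    by left; do 3 eexists; split; [reflexivity|reflexivity|reflexivity|apply/XY_H].
  right; exists i, (ins_wtype (fn Y) p d cE w); split; try exact: belongs_ins_plus.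
  by apply/wHP; rewrite !pcode_ins_plus (wH_ins_wtype _ pX XY).
- case=> [[a' [b' [c' [/ins_plus_inl[a -> ea] /ins_plus_inl[b -> eb] /ins_plus_inl[c -> ec]
           abc]]]]|[i [w [bx bY bz /wHP ew]]]].
    by left; exists a, b, c; split=> //;
      apply/(XY_H (ltn_ord a) (ltn_ord b) (ltn_ord c)); rewrite -ea -eb -ec.
  right; exists i, (unins_wtype (fn X) p d w); split; try exact: belongs_unins_wtype.
  by apply/wHP; rewrite (wH_unins_wtype pX XY) -!pcode_ins_plus.
Qed.

Lemma ins_plus_emb : lfs_emb ins_plus.
Proof.
split; first exact: ins_plus_inj.
by split; [exact: ins_plus_pE|exact: ins_plus_pL|exact: ins_plus_pH|exact: ins_plus_pf|
           exact: ins_plus_pf_dom].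
Qed.

End Relations.

End InsertionPlus.
Arguments ins_plus {X Y} p d cE XY x.

Lemma ins_plus_comp (X Y Z : fstr) p d1 d2 (cE1 cE2 cE : nat -> bool)
    (XY : fn X + d1 = fn Y) (YZ : fn Y + d2 = fn Z) (XZ : fn X + (d1 + d2) = fn Z) :
  0 < p -> p <= fn X ->
  (forall u, fresh p d1 u -> cE1 u = cE u) -> (forall u, fresh (p + d1) d2 u -> cE2 u = cE u) ->
  forall x, ins_plus (p + d1) d2 cE2 YZ (ins_plus p d1 cE1 XY x) = ins_plus p (d1 + d2) cE XZ x.
Proof.
move=> p0 pX cE1E cE2E [a|[k w]] /=; first by congr inl; apply: val_inj; rewrite /= ins_comp.
by rewrite (ins_wtype_comp _ p0 pX XY YZ cE1E cE2E).
Qed.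

(** * Weak types of tuples *)

Definition pbool (P : Prop) : bool := if excluded_middle_informative P then true else false.

Lemma pboolP P : reflect P (pbool P).
Proof. by rewrite /pbool; case: excluded_middle_informative => h; constructor. Qed.

Lemma eq_pbool (P Q : Prop) : (P <-> Q) -> pbool P = pbool Q.
Proof. by move=> PQ; apply/idP/idP => /pboolP/PQ/pboolP. Qed.

Lemma pbool_bool (b : bool) : pbool b = b.
Proof. by apply/pboolP/idP. Qed.

Definition wtype_of (X : estr) l (s : seq nat) : wdata l 0 :=
  wdata_of l 0 (fun x y => pbool (relE X (tmap l s x) (tmap l s y)))
               (fun x y => pbool (relL X (tmap l s x) (tmap l s y)))
               (fun x y z => pbool (relH X (tmap l s x) (tmap l s y) (tmap l s z))).

Lemma typeNode_wtype_of X l s : 0 < size s -> typeNode X l s (existT _ 0 (wtype_of X l s)).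
Proof.
move=> s0; split=> // x y z hx hy hz /=; split=> ha.
- apply: (iff_trans (rwP (wEP _ _ _))); rewrite wE_of hx hy ha.
  exact: (iff_sym (rwP (pboolP _))).
- apply: (iff_trans (rwP (wLP _ _ _))); rewrite wL_of hx hy ha.
  exact: (iff_sym (rwP (pboolP _))).
- apply: (iff_trans (rwP (wHP _ _ _ _))); rewrite wH_of hx hy hz ha.
  exact: (iff_sym (rwP (pboolP _))).
Qed.

Lemma typeNodeP T l s k (w : wdata l k) x y z :
  typeNode T l s (existT _ k w) -> x < l + k.+1 -> y < l + k.+1 -> z < l + k.+1 ->
  [/\ adm l [:: x; y] -> (wE w x y <-> relE T (tmap l s x) (tmap l s y)),
      adm l [:: x; y] -> (wL w x y <-> relL T (tmap l s x) (tmap l s y)) &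
      adm l [:: x; y; z] ->
        (wH w x y z <-> relH T (tmap l s x) (tmap l s y) (tmap l s z))].
Proof.
case=> _ /(_ x y z) h /h /[apply] /[apply] -[hE hL hH].
split=> [/hE|/hL|/hH]; apply: iff_trans; apply: iff_sym; apply: rwP;
  [exact: wEP|exact: wLP|exact: wHP].
Qed.

Lemma tmap_base l s u : u < l -> tmap l s u = u.
Proof. by rewrite /tmap => ->. Qed.

Lemma tmap_top l s : tmap l s l = nth 0 s 0.
Proof. by rewrite /tmap ltnn subnn. Qed.

Section Covering.
Variables (T : estr) (X Y : fstr) (p d : nat) (cE : nat -> bool).
Hypotheses (pX : p <= fn X) (XY : fn X + d = fn Y).
Local Notation m := (fn Y).
Hypothesis cE_pos : forall u, fresh p d u -> cE u -> 0 < p.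
Hypothesis dom_fresh : forall u, fresh p d u -> dom T u.
Hypothesis relE_fresh_above : forall u y, fresh p d u -> m <= y -> dom T y ->
  (relE T u y <-> cE u /\ relE T 0 y).
Hypothesis no_relE_to_fresh : forall u y, fresh p d u -> m <= y -> ~ relE T y u.
Hypothesis no_relH_fresh : forall x y z,
  fresh p d x || fresh p d y || fresh p d z -> ~ relH T x y z.

Lemma typeNode_fresh_rows s k (w : wdata m k) :
  (forall a, a \in s -> m <= a /\ dom T a) -> typeNode T m s (existT _ k w) ->
  (forall u, fresh p d u ->
     [/\ wE w u m = cE u && wE w 0 m, wE w m u = false, wL w u m & wL w m u = false]) /\
  (forall x y z, fresh p d x || fresh p d y || fresh p d z -> wH w x y z = false).
Proof.
move=> s_above tN; have [/= ks _] := tN.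
have [a0m da0] : m <= nth 0 s 0 /\ dom T (nth 0 s 0).
  by apply: s_above; apply: mem_nth; move: ks; simpl; lia.
have fm u : fresh p d u -> u < m := fresh_ltn pX XY.
have top : m < m + k.+1 by lia.
split=> [u fu|x y z f3].
  have um := fm u fu; have uk : u < m + k.+1 by lia.
  have lt0 : 0 < m + k.+1 by lia.
  have [tE_um tL_um _] := typeNodeP tN uk top uk.
  have [tE_mu tL_mu _] := typeNodeP tN top uk uk.
  have [tE_0m _ _] := typeNodeP tN lt0 top uk.
  have tu : tmap m s u = u by apply: tmap_base.
  have t0 : tmap m s 0 = 0 by apply: tmap_base; lia.
  rewrite tu t0 tmap_top in tE_um tL_um tE_mu tL_mu tE_0m.
  have adm_um := adm_base_top um; have adm_mu := adm_top_base um.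
  have adm_0m : adm m [:: 0; m] by apply: adm_base_top; lia.
  split.
  - apply/idP/andP => [/(tE_um adm_um)/(relE_fresh_above fu a0m da0) [cu /(tE_0m adm_0m)] //|].
    by case=> cu /(tE_0m adm_0m) r0; apply/(tE_um adm_um)/relE_fresh_above.
  - by apply/negbTE/negP => /(tE_mu adm_mu); apply: no_relE_to_fresh.
  - by apply/(tL_um adm_um); split; [exact: dom_fresh|done|lia].
  - by apply/negbTE/negP => /(tL_mu adm_mu) [_ _]; lia.
apply/negbTE/negP => h; have /and4P[hx hy hz ha] := wH_dom h.
have [_ _ /(_ ha) tH] := typeNodeP tN hx hy hz.
move/tH: h; apply: no_relH_fresh; move: f3; rewrite -!orbA.
by case/or3P=> f; [rewrite (tmap_base _ (fm x f)) f|rewrite (tmap_base _ (fm y f)) f orbT|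
  rewrite (tmap_base _ (fm z f)) f !orbT].
Qed.

Lemma ins_plus_covers s N :
  (forall a, a \in s -> m <= a /\ dom T a) -> typeNode T m s N ->
  exists x, ins_plus p d cE XY x = inr N.
Proof.
case: N => k w s_above tN; have [rows wH0] := typeNode_fresh_rows s_above tN.
exists (inr (existT _ k (unins_wtype (fn X) p d w))) => /=.
by rewrite (ins_unins_wtype pX XY cE_pos rows wH0).
Qed.

End Covering.

(** * Extensions by fresh vertices *)

Lemma tuple_in_image_dom A B h l s : (forall x, dom A x -> dom B (h x)) ->
  tuple_in_image A B h l s -> forall a, a \in s -> l <= a /\ dom B a.
Proof. by move=> hdom [_ hs] a /hs [la [x [dx ea]]]; subst a; split=> //; apply: hdom. Qed.

Lemma mono_F_of (A : estr) v0 v1 v2 v3 : uniq [:: v0; v1; v2; v3] ->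
  relE A v1 v0 -> relE A v1 v2 -> relE A v1 v3 -> relH A v0 v2 v3 -> exists m, mono_F A m.
Proof.
move=> uv E10 E12 E13 H023; exists (nth 0 [:: v0; v1; v2; v3]); split.
- by case: E10 E12 E13 => d1 d0 _ [_ d2 _] [_ d3 _] [|[|[|[|k]]]].
- by move=> x y x4 y4 /eqP; rewrite nth_uniq // => /eqP.
- by move=> x y [[-> ->]|[[-> ->]|[-> ->]]].
- by move=> x y z [-> [-> ->]].
Qed.

(* Insert [d] fresh vertices at position [p]: a fresh [u] with [cE u] gets an
   E-edge to every shifted vertex whose preimage is an E-successor of 0, and
   [eN] adds further edges at fresh vertices. *)
Definition ins_str p d (cE : nat -> bool) (eN : nat -> nat -> Prop) (A : estr) : estr :=
  EStr (omap (addn^~ d) (esz A))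
    (fun x y => [/\ ~~ fresh p d x, ~~ fresh p d y & eE A (unins p d x) (unins p d y)]
                \/ [/\ fresh p d x, p + d <= y, cE x & eE A 0 (y - d)] \/ eN x y)
    (fun x y z => [/\ ~~ fresh p d x, ~~ fresh p d y, ~~ fresh p d z &
                      eH A (unins p d x) (unins p d y) (unins p d z)]).

Section InsertedStructure.
Variables (p d : nat) (cE : nat -> bool) (eN : nat -> nat -> Prop) (A : estr).
Hypothesis A_dom : forall x, x < p -> dom A x.
Hypothesis eN_fresh : forall x y, eN x y ->
  [&& fresh p d x || fresh p d y, x < p + d & y < p + d].
Hypothesis cE_pos : forall u, fresh p d u -> cE u -> 0 < p.
Local Notation B := (ins_str p d cE eN A).

Lemma dom_ins_str_ins x : dom B (ins p d x) <-> dom A x.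
Proof.
move: A_dom; rewrite /dom /=; case: (esz A) => [k|] //= Adom.
have pk : p <= k by move: Adom; case: (p) => // p' /(_ p' (ltnSn p')).
by rewrite -[k + d]addn0 (ins_ltn _ _ pk erefl) addn0.
Qed.

Lemma dom_ins_str_fresh u : fresh p d u -> dom B u.
Proof.
move: A_dom; rewrite /dom /fresh /=; case: (esz A) => [k|] //= Adom /andP[pu ud].
have pk : p <= k by move: Adom; case: (p) => // p' /(_ p' (ltnSn p')).
lia.
Qed.

Lemma dom_ins_str_unins y : ~~ fresh p d y -> dom B y -> dom A (unins p d y).
Proof. by move=> fy; rewrite -{1}(ins_unins fy) => /dom_ins_str_ins. Qed.

Lemma eN_ins x y : ~ eN (ins p d x) (ins p d y).
Proof. by move/eN_fresh; rewrite !fresh_ins. Qed.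

Lemma eE_ins_str x y : eE B (ins p d x) (ins p d y) <-> eE A x y.
Proof.
rewrite /= !fresh_ins !unins_ins; split=> [[[]//|[[]//|/eN_ins]]|]; first done.
by left.
Qed.

Lemma eH_ins_str x y z : eH B (ins p d x) (ins p d y) (ins p d z) <-> eH A x y z.
Proof. by rewrite /= !fresh_ins !unins_ins; split=> [[]|]. Qed.

Lemma ins_str_emb : emb A B (ins p d).
Proof.
split=> [x /dom_ins_str_ins //|x y _ _ /ins_inj //|x y dx dy|x y dx dy|x y z dx dy dz].
- by rewrite /relL leq_ins; split=> -[]; split=> //; apply/dom_ins_str_ins.
- by split=> -[_ _ /eE_ins_str]; split=> //; apply/dom_ins_str_ins.
- by split=> -[_ _ _ /eH_ins_str]; split=> //; apply/dom_ins_str_ins.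
Qed.

Lemma eE_ins_str_below x y : x < p -> y < p -> eE B x y <-> eE A x y.
Proof. by move=> xp yp; rewrite -{1}(ins_id d xp) -{1}(ins_id d yp) eE_ins_str. Qed.

Lemma eH_ins_str_below x y z : x < p -> y < p -> z < p -> eH B x y z <-> eH A x y z.
Proof.
by move=> xp yp zp; rewrite -{1}(ins_id d xp) -{1}(ins_id d yp) -{1}(ins_id d zp) eH_ins_str.
Qed.

Section Above.
Variable m : nat.
Hypothesis pdm : p + d <= m.

Lemma relE_ins_str_fresh u y : fresh p d u -> m <= y -> dom B y ->
  (relE B u y <-> cE u /\ relE B 0 y).
Proof.
move=> fu my dy; have du := dom_ins_str_fresh fu.
have ey : ins p d (y - d) = y by rewrite ins_shift; lia.
have e0 p0 : ins p d 0 = 0 := ins_id d p0.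
split=> [[_ _ [[/negP//]|[[_ _ cu E0y]|/eN_fresh/and3P[_ _ ypd]]]]|[cu [d0 _ E0y]]];
  [|exfalso; lia|].
- have p0 := cE_pos fu cu; split=> //; split=> //.
    by rewrite -(e0 p0); apply/dom_ins_str_ins/A_dom.
  by rewrite -(e0 p0) -ey; apply/eE_ins_str.
- have p0 := cE_pos fu cu; move: E0y; rewrite -(e0 p0) -{1}ey => /eE_ins_str E0y.
  by split=> //; right; left; split=> //; lia.
Qed.

Lemma no_relE_ins_str_to_fresh u y : fresh p d u -> m <= y -> ~ relE B y u.
Proof.
move=> fu my [_ _ [[_ /negP//]|[[fy _ _ _]|/eN_fresh/and3P[_ ypd _]]]]; last lia.
by move: fy; rewrite /fresh; lia.
Qed.

End Above.

Lemma no_relH_ins_str_fresh x y z :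
  fresh p d x || fresh p d y || fresh p d z -> ~ relH B x y z.
Proof. by move=> + [_ _ _ [fx fy fz _]]; rewrite (negbTE fx) (negbTE fy) (negbTE fz). Qed.

Lemma ins_str_type_resp : type_resp A B (ins p d).
Proof.
split; first exact: ins_str_emb.
move=> v dv; have s_dom s : tuple_in_image A B (ins p d) (ins p d v) s ->
    forall a, a \in s -> ins p d v <= a /\ dom B a.
  by apply: tuple_in_image_dom => x /dom_ins_str_ins.
case: (ltnP v p) => vp.
- have vv : v + 0 = ins p d v by rewrite addn0 ins_id.
  exists (@ins_plus (initseg A v) (initseg B (ins p d v)) v 0 cE vv); split.
    apply: ins_plus_emb => //= [a b av bv|a b c av bv cv]; rewrite !ins_id //; apply: iff_sym.
      by apply: eE_ins_str_below; lia.
    by apply: eH_ins_str_below; lia.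
  move=> s /s_dom s_above N.
  apply: (@ins_plus_covers B (initseg A v) (initseg B (ins p d v)) v 0 cE (leqnn v) vv
            _ _ _ _ _ s N s_above).
  all: try by move=> u; rewrite fresh0.
  all: try by move=> u y; rewrite fresh0.
  by move=> x y z; rewrite !fresh0.
- have vv : v + d = ins p d v by rewrite ins_shift.
  exists (@ins_plus (initseg A v) (initseg B (ins p d v)) p d cE vv); split.
    by apply: ins_plus_emb => //= *; apply: iff_sym; [apply: eE_ins_str|apply: eH_ins_str].
  move=> s /s_dom s_above N.
  apply: (@ins_plus_covers B (initseg A v) (initseg B (ins p d v)) p d cE vp vv
            _ _ _ _ _ s N s_above).
  + exact: cE_pos.
  + exact: dom_ins_str_fresh.
  + by apply: relE_ins_str_fresh; rewrite /= -vv; lia.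
  + by apply: no_relE_ins_str_to_fresh; rewrite /= -vv; lia.
  + exact: no_relH_ins_str_fresh.
Qed.

Section KPreservation.
Hypothesis eN_to_fresh : forall x y, eN x y -> fresh p d y.

Lemma eE_ins_str_old x y :
  ~~ fresh p d x -> ~~ fresh p d y -> eE B x y -> eE A (unins p d x) (unins p d y).
Proof.
by move=> fx fy [[]//|[[fx' _ _ _]|/eN_to_fresh fy']]; [rewrite fx' in fx|rewrite fy' in fy].
Qed.

Lemma eE_ins_str_fresh u y : fresh p d u -> ~~ fresh p d y -> eE B u y ->
  eE A 0 (unins p d y) /\ p <= unins p d y.
Proof.
move=> fu fy [[fu' _ _]|[[_ pdy _ E0y]|/eN_to_fresh fy']]; first by rewrite fu in fu'.
  have -> : unins p d y = y - d by rewrite /unins; case: ifP; lia.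
  by split=> //; lia.
by rewrite fy' in fy.
Qed.

(* A copy of F centred at a fresh vertex moves to a copy centred at 0, since
   fresh vertices only copy the E-edges of 0. *)
Lemma Kclass_ins_str : 0 < p -> Kclass A -> Kclass B.
Proof.
move=> p0 KA [m [mdom minj mE mH]]; apply: KA.
have [F10 F12 F13] : [/\ FE 1 0, FE 1 2 & FE 1 3] by split; [left|right; left|right; right].
have [_ _ _ [f0 f2 f3 H023]] := mH 0 2 3 (conj erefl (conj erefl erefl)).
have dA k : k < 4 -> ~~ fresh p d (m k) -> dom A (unins p d (m k)).
  by move=> k4 fk; apply: dom_ins_str_unins fk (mdom k k4).
have neq k l : k < 4 -> l < 4 -> k != l -> ~~ fresh p d (m k) -> ~~ fresh p d (m l) ->
    unins p d (m k) != unins p d (m l).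
  by move=> k4 l4 kl fk fl; apply: contra kl => /eqP/(unins_inj_old fk fl)/minj ->.
have H'023 : relH A (unins p d (m 0)) (unins p d (m 2)) (unins p d (m 3)).
  by split=> //; apply: dA.
have [f1|f1] := boolP (fresh p d (m 1)).
- have edge k : FE 1 k -> k < 4 -> ~~ fresh p d (m k) ->
      relE A 0 (unins p d (m k)) /\ p <= unins p d (m k).
    move=> /mE [_ _ /eE_ins_str_fresh] E1k k4 fk; have [E0k pk] := E1k f1 fk.
    by split=> //; split; [apply: A_dom|apply: dA|].
  have [E0 p0'] := edge 0 F10 erefl f0.
  have [E2 p2] := edge 2 F12 erefl f2.
  have [E3 p3] := edge 3 F13 erefl f3.
  apply: (mono_F_of _ E0 E2 E3 H'023).
  by rewrite /= !inE !negb_or !neq //= andbT; apply/and3P; split; lia.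
have edge k : FE 1 k -> k < 4 -> ~~ fresh p d (m k) ->
    relE A (unins p d (m 1)) (unins p d (m k)).
  by move=> /mE [_ _ /(eE_ins_str_old f1)] E1k k4 fk; split; [apply: dA|apply: dA|apply: E1k].
apply: (mono_F_of _ (edge 0 F10 erefl f0) (edge 2 F12 erefl f2) (edge 3 F13 erefl f3) H'023).
by rewrite /= !inE !negb_or !neq.
Qed.

End KPreservation.

End InsertedStructure.

Lemma initseg_ins_str (X Y : fstr) d cE eN A' : fn X + d = fn Y -> initseg_of X A' ->
  (forall x y, x < fn Y -> y < fn Y ->
     (fE Y x y <-> (x < fn X) && (y < fn X) /\ fE X x y \/ eN x y)) ->
  (forall x y z, x < fn Y -> y < fn Y -> z < fn Y ->
     (fH Y x y z <-> [&& x < fn X, y < fn X & z < fn X] /\ fH X x y z)) ->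
  initseg_of Y (ins_str (fn X) d cE eN A').
Proof.
move=> XY [Xdom XE XH] YE YH.
have old x : x < fn Y -> ~~ fresh (fn X) d x = (x < fn X).
  by rewrite /fresh -XY; case: ltnP => /=; lia.
have unins_old x : x < fn X -> unins (fn X) d x = x by rewrite /unins => ->.
split=> [x xY|x y xY yY|x y z xY yY zY].
- have [xX|Xx] := ltnP x (fn X).
    by rewrite -(ins_id d xX); apply/(dom_ins_str_ins d cE eN Xdom x); apply: Xdom.
  by apply: (dom_ins_str_fresh cE eN Xdom); rewrite /fresh Xx; lia.
- rewrite YE //= !old //.
  split=> [[[xX yX E]|[[_ Yy _ _]|eNxy]]|[[/andP[xX yX] E]|eNxy]].
  + by left; split; [rewrite xX yX|apply/(XE x y xX yX); rewrite !unins_old in E].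
  + by exfalso; lia.
  + by right.
  + by left; split=> //; rewrite !unins_old //; apply/(XE x y xX yX).
  + by right; right.
- rewrite YH //= !old //; split=> [[xX yX zX]|[/and3P[xX yX zX]]].
    by rewrite !unins_old // => /(XH x y z xX yX zX); rewrite xX yX zX.
  by rewrite !unins_old // => /(XH x y z xX yX zX).
Qed.

Lemma ins_plus_Ktype_resp (K : estr -> Prop) (X Y : fstr) p d (cE : nat -> bool)
    (eN : nat -> nat -> Prop) (XY : fn X + d = fn Y) :
  p <= fn X -> lfs_emb (ins_plus p d cE XY) ->
  (forall u, fresh p d u -> cE u -> 0 < p) ->
  (forall x y, eN x y -> [&& fresh p d x || fresh p d y, x < p + d & y < p + d]) ->
  (forall A', K A' -> initseg_of X A' ->
     K (ins_str p d cE eN A') /\ initseg_of Y (ins_str p d cE eN A')) ->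
  Ktype_resp K (ins_plus p d cE XY).
Proof.
move=> pX hemb cE_pos eN_fresh hK; split=> // A' KA' XA'.
have A_dom x : x < p -> dom A' x.
  by case: XA' => Xdom _ _ xp; apply: Xdom; apply: leq_trans xp pX.
have [KB YB] := hK A' KA' XA'.
exists (ins_str p d cE eN A'), (ins p d); split=> //.
- exact: ins_str_type_resp.
- by move=> a; eexists; split; reflexivity.
move=> s /(tuple_in_image_dom (fun x => (dom_ins_str_ins d cE eN A_dom x).2)) s_above N.
apply: (@ins_plus_covers _ X Y p d cE pX XY _ _ _ _ _ s N s_above).
- exact: cE_pos.
- exact: dom_ins_str_fresh.
- by apply: (relE_ins_str_fresh A_dom eN_fresh cE_pos); lia.
- by apply: (no_relE_ins_str_to_fresh eN_fresh); lia.
- exact: no_relH_ins_str_fresh.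
Qed.

(** * Level-0 types in A^+ *)

Section LevelZero.
Variable X : fstr.
Local Notation n := (fn X).

(* f sends t_(k+1) to a vertex other than itself, but fixes t_0. *)
Lemma lfs_emb_level0 (Y : fstr) (h : car (plus X) -> car (plus Y)) k (w : wdata n k)
    (w' : wdata (fn Y) 0) :
  lfs_emb h -> h (inr (existT _ k w)) = inr (existT _ 0 w') -> k = 0.
Proof.
case: k w => // k w [hinj [_ _ _ hpf _]] hw.
have pf_w : pf (inr (existT _ k.+1 w) : pcar X) (inr (existT _ k (wrestr w))).
  by right; split=> //; apply: agree_wrestr.
move: (hpf _ _ pf_w); rewrite hw /=.
case e: (h (inr (existT _ k (wrestr w)))) => [//|M]; case=> [[_ eM]|[/eqP //]].
subst M; rewrite -hw in e.
by have /= := congr1 (fun x => if x is inr N then tag N else 0) (hinj _ _ e); lia.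
Qed.

(* Codes c < n are base vertices; every other code is read as t_0. *)
Definition vertex_of (w : wdata n 0) (c : nat) : car (plus X) :=
  if insub c is Some a then inl a else inr (existT _ 0 w).

Variable w : wdata n 0.

Lemma vertex_of_base (a : 'I_n) : vertex_of w a = inl a.
Proof. by rewrite /vertex_of valK. Qed.

Lemma vertex_of_top : vertex_of w n = inr (existT _ 0 w).
Proof. by rewrite /vertex_of insubF ?ltnn. Qed.

Lemma vertex_of_inl c a : vertex_of w c = inl a -> c = val a.
Proof. by rewrite /vertex_of; case: insubP => // b _ <- [->]. Qed.

Lemma pcode_vertex_of c : c <= n -> pcode (vertex_of w c) = c.
Proof.
rewrite /vertex_of; case: insubP => [a _ <-|] //=.
by rewrite addn0 -leqNgt => ? ?; apply/eqP; rewrite eqn_leq; apply/andP.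
Qed.

Lemma belongs_vertex_of c : belongs w (vertex_of w c).
Proof. by rewrite /vertex_of; case: insubP. Qed.

Section Tuple.
Variable cs : seq nat.
Hypotheses (cs_n : all (fun c => c <= n) cs) (cs_adm : adm n cs).

Lemma vertex_of_adm_inl : ~ (forall c, c \in cs -> exists a, vertex_of w c = inl a).
Proof.
move/(_ n (adm_top cs_n cs_adm)) => [a /vertex_of_inl ea].
by have := ltn_ord a; rewrite -ea ltnn.
Qed.

Lemma vertex_of_adm_agree i (w' : wdata n i) :
  (forall c, c \in cs -> belongs w' (vertex_of w c)) -> agree 0 w w'.
Proof. by move/(_ n (adm_top cs_n cs_adm)); rewrite vertex_of_top => -[]. Qed.

End Tuple.

Lemma plus_level0_rel x y z : x <= n -> y <= n -> z <= n ->
  [/\ adm n [:: x; y] -> (pE (vertex_of w x) (vertex_of w y) <-> wE w x y),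
      adm n [:: x; y] -> (pL (vertex_of w x) (vertex_of w y) <-> wL w x y) &
      adm n [:: x; y; z] ->
        (pH (vertex_of w x) (vertex_of w y) (vertex_of w z) <-> wH w x y z)].
Proof.
move=> xn yn zn; have lt u : u <= n -> u < n + 1 by rewrite addn1.
have px := pcode_vertex_of xn; have py := pcode_vertex_of yn; have pz := pcode_vertex_of zn.
have bel := belongs_vertex_of.
have cs2 : all (fun c => c <= n) [:: x; y] by rewrite /= xn yn.
have cs3 : all (fun c => c <= n) [:: x; y; z] by rewrite /= xn yn zn.
split=> ha.
- split=> [[[a [b [ex ey _]]]|[i [w' [bx bY /wEP]]]]|Exy].
  + exfalso; apply: (vertex_of_adm_inl cs2 ha) => c.
    by rewrite !inE => /orP[]/eqP->; eexists; eassumption.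
  + have bel_cs c : c \in [:: x; y] -> belongs w' (vertex_of w c).
      by rewrite !inE => /orP[]/eqP->.
    rewrite px py.
    have /agreeP := vertex_of_adm_agree cs2 ha bel_cs.
    by move=> /(_ x y x (lt _ xn) (lt _ yn) (lt _ xn)) [<- _ _].
  + by right; exists 0, w; split=> //; apply/wEP; rewrite px py.
- split=> [[[a [b [ex ey _]]]|[i [w' [bx bY /wLP]]]]|Lxy].
  + exfalso; apply: (vertex_of_adm_inl cs2 ha) => c.
    by rewrite !inE => /orP[]/eqP->; eexists; eassumption.
  + have bel_cs c : c \in [:: x; y] -> belongs w' (vertex_of w c).
      by rewrite !inE => /orP[]/eqP->.
    rewrite px py.
    have /agreeP := vertex_of_adm_agree cs2 ha bel_cs.
    by move=> /(_ x y x (lt _ xn) (lt _ yn) (lt _ xn)) [_ <- _].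
  + by right; exists 0, w; split=> //; apply/wLP; rewrite px py.
- split=> [[[a [b [c [ex ey ez _]]]]|[i [w' [bx bY bz /wHP]]]]|Hxyz].
  + exfalso; apply: (vertex_of_adm_inl cs3 ha) => u.
    by rewrite !inE => /or3P[]/eqP->; eexists; eassumption.
  + have bel_cs c : c \in [:: x; y; z] -> belongs w' (vertex_of w c).
      by rewrite !inE => /or3P[]/eqP->.
    rewrite px py pz.
    have /agreeP := vertex_of_adm_agree cs3 ha bel_cs.
    by move=> /(_ x y z (lt _ xn) (lt _ yn) (lt _ zn)) [_ _ <-].
  + by right; exists 0, w; split=> //; apply/wHP; rewrite px py pz.
Qed.

End LevelZero.

Section BaseFixingEmbedding.
Variables (X Y : fstr) (d : nat) (h : car (plus X) -> car (plus Y)).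
Variables (w : wdata (fn X) 0) (w' : wdata (fn Y) 0).
Hypotheses (XY : fn X + d = fn Y) (h_emb : lfs_emb h) (h_base : fixes_base h).
Hypothesis hw : h (inr (existT _ 0 w)) = inr (existT _ 0 w').

Lemma vertex_of_fixes_base c : c <= fn X -> h (vertex_of w c) = vertex_of w' (ins (fn X) d c).
Proof.
case: (ltnP c (fn X)) => [cX _|nc cn].
  have [b' [hb eb']] := h_base (Ordinal cX).
  by rewrite -[c]/(val (Ordinal cX)) vertex_of_base hb ins_id // -eb' vertex_of_base.
have -> : c = fn X by apply/eqP; rewrite eqn_leq cn.
by rewrite (ins_top (leqnn _) XY) !vertex_of_top.
Qed.

Lemma lfs_emb_level0_wtype : w = unins_wtype (fn X) (fn X) d w'.
Proof.
have nn := leqnn (fn X); have hv := vertex_of_fixes_base.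
have ins_le u : u <= fn X -> ins (fn X) d u <= fn Y by rewrite /ins; case: ifP; lia.
case: h_emb => _ [hE hL hH _ _].
apply: wdata_ext_dom => [x y|x y z]; rewrite !addn1 => xn yn.
  move=> ha; rewrite (wE_unins_wtype nn XY) (wL_unins_wtype nn XY).
  have hY : adm (fn Y) [:: ins (fn X) d x; ins (fn X) d y] by rewrite (adm2_ins nn XY).
  have [rEX rLX _] := plus_level0_rel w xn yn xn.
  have [rEY rLY _] := plus_level0_rel w' (ins_le x xn) (ins_le y yn) (ins_le x xn).
  split; apply/idP/idP.
  - by move=> /(rEX ha)/hE; rewrite !hv // => /(rEY hY).
  - by move=> /(rEY hY); rewrite -!hv // => /hE/(rEX ha).
  - by move=> /(rLX ha)/hL; rewrite !hv // => /(rLY hY).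
  - by move=> /(rLY hY); rewrite -!hv // => /hL/(rLX ha).
move=> zn ha; rewrite (wH_unins_wtype nn XY).
have hY : adm (fn Y) [:: ins (fn X) d x; ins (fn X) d y; ins (fn X) d z].
  by rewrite (adm3_ins nn XY).
have [_ _ rHX] := plus_level0_rel w xn yn zn.
have [_ _ rHY] := plus_level0_rel w' (ins_le x xn) (ins_le y yn) (ins_le z zn).
apply/idP/idP; first by move=> /(rHX ha)/hH; rewrite !hv // => /(rHY hY).
by move=> /(rHY hY); rewrite -!hv // => /hH/(rHX ha).
Qed.

End BaseFixingEmbedding.

Lemma unins_wtype_of (D B : estr) h l d z :
  emb D B h -> (forall a, a < l -> dom D a /\ h a = a) -> dom D z ->
  unins_wtype l l d (wtype_of B (l + d) [:: h z]) = wtype_of D l [:: z].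
Proof.
move=> [_ _ hL hE hH] hbase dz; have ll := leqnn l.
have tm x : x < l + 1 -> tmap (l + d) [:: h z] (ins l d x) = h (tmap l [:: z] x).
  rewrite addn1 ltnS leq_eqVlt => /orP[/eqP ->|xl].
    by rewrite ins_shift // !tmap_top.
  by rewrite ins_id // !tmap_base ?(hbase x xl).2 //; lia.
have dm x : x < l + 1 -> dom D (tmap l [:: z] x).
  rewrite addn1 ltnS leq_eqVlt => /orP[/eqP ->|xl]; first by rewrite tmap_top.
  by rewrite tmap_base //; case: (hbase x xl).
apply: wdata_ext_dom => [x y xl yl ha|x y z' xl yl zl ha].
  rewrite (wE_unins_wtype ll erefl) (wL_unins_wtype ll erefl) !wE_of !wL_of.
  rewrite !(ins_ltn _ _ ll erefl) (adm2_ins ll erefl) xl yl ha /= !tm //.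
  by split; apply/esym/eq_pbool; [apply: hE|apply: hL]; apply: dm.
rewrite (wH_unins_wtype ll erefl) !wH_of !(ins_ltn _ _ ll erefl) (adm3_ins ll erefl).
by rewrite xl yl zl ha /= !tm //; apply/esym/eq_pbool/hH; apply: dm.
Qed.

(** * The counterexample *)

Definition edge21 (x y : nat) : Prop := x = 2 /\ y = 1.

Definition A_cx := FStr 1 (fun _ _ => False) (fun _ _ _ => False).
Definition B_cx := FStr 2 (fun _ _ => False) (fun _ _ _ => False).
Definition B'_cx := FStr 3 edge21 (fun _ _ _ => False).

Definition f_cx : car (plus A_cx) -> car (plus B_cx) :=
  @ins_plus A_cx B_cx 1 1 xpred0 erefl.
Definition f'_cx : car (plus A_cx) -> car (plus B'_cx) :=
  @ins_plus A_cx B'_cx 1 2 (xpred1 2) erefl.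
Definition g_cx : car (plus B_cx) -> car (plus B'_cx) :=
  @ins_plus B_cx B'_cx 2 1 (xpred1 2) erefl.

Lemma Kclass_no_edges (A : estr) : (forall x y, ~ eE A x y) -> Kclass A.
Proof.
by move=> noE [m [_ _ mE _]]; case: (mE 1 0 (or_introl (conj erefl erefl))) => _ _ /noE.
Qed.

Lemma Kclass_A_cx : Kclass (to_estr A_cx).
Proof. by apply: Kclass_no_edges => ? ? []. Qed.

Lemma Kclass_B_cx : Kclass (to_estr B_cx).
Proof. by apply: Kclass_no_edges => ? ? []. Qed.

Lemma Kclass_B'_cx : Kclass (to_estr B'_cx).
Proof.
case=> m [_ minj mE _].
have [_ _ [_ e0]] := mE 1 0 (or_introl (conj erefl erefl)).
have [_ _ [_ e2]] := mE 1 2 (or_intror (or_introl (conj erefl erefl))).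
by have := minj 0 2 erefl erefl; rewrite e0 e2 => /(_ erefl).
Qed.

Lemma g_f_cx x : g_cx (f_cx x) = f'_cx x.
Proof. by apply: (ins_plus_comp _ _ _ (erefl : 0 < 1)) => // u /andP[]; case: u => [|[]]. Qed.

Lemma fixes_base_g_cx : fixes_base g_cx.
Proof. by move=> b; eexists; split; [reflexivity|rewrite /= ins_id]. Qed.

Lemma edge21_fresh p d : p <= 2 -> 2 < p + d ->
  forall x y, edge21 x y -> [&& fresh p d x || fresh p d y, x < p + d & y < p + d].
Proof. by move=> p1 pd x y [-> ->]; rewrite /fresh; apply/and3P; split; lia. Qed.

Lemma Ktype_resp_f_cx : Ktype_resp Kclass f_cx.
Proof.
apply: (@ins_plus_Ktype_resp _ _ _ _ _ _ (fun _ _ => False)) => //.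
  by apply: ins_plus_emb.
move=> A' KA' XA'; have A_dom x : x < 1 -> dom A' x by case: XA' => + _ _; apply.
split; first by apply: (Kclass_ins_str A_dom) => // x y [].
apply: (@initseg_ins_str A_cx) => //= x y; last by move=> *; split=> [[]|[]].
by move=> *; split=> [[]|[[]|[]]].
Qed.

Lemma Ktype_resp_f'_cx : Ktype_resp Kclass f'_cx.
Proof.
apply: (@ins_plus_Ktype_resp _ _ _ _ _ _ edge21) => //; [|exact: edge21_fresh|].
  by apply: ins_plus_emb => //= [[|//] [|//] _ _]; split=> // -[].
move=> A' KA' XA'; have A_dom x : x < 1 -> dom A' x by case: XA' => + _ _; apply.
split.
  by apply: (Kclass_ins_str A_dom) => // x y [_ ->].
apply: (@initseg_ins_str A_cx) => //=.
  by move=> x y *; split=> [|[[_ []]|]]; [right|].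
by move=> *; split=> [[]|[]].
Qed.

Lemma Ktype_resp_g_cx : Ktype_resp (fun _ => True) g_cx.
Proof.
apply: (@ins_plus_Ktype_resp _ _ _ _ _ _ edge21) => //; [|exact: edge21_fresh|].
  apply: ins_plus_emb => //= a b a2 b2.
  by rewrite !ins_id //; split=> // -[ea]; move: a2; rewrite ea.
move=> A' _ XA'; split=> //.
apply: (@initseg_ins_str B_cx) => //=.
  by move=> x y *; split=> [|[[_ []]|]]; [right|].
by move=> *; split=> [[]|[]].
Qed.

Definition D_cx : estr :=
  EStr (Some 4) (fun x y => (x == 0) && ((y == 2) || (y == 3)))
                (fun x y z => [&& x == 1, y == 2 & z == 3]).

Lemma Kclass_D_cx : Kclass D_cx.
Proof.
case=> m [_ minj mE _].
have to23 k : FE 1 k -> m k = 2 \/ m k = 3.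
  by move=> /mE [_ _ /andP[_ /orP[] /eqP ->]]; [left|right].
have h0 := to23 0 (or_introl (conj erefl erefl)).
have h2 := to23 2 (or_intror (or_introl (conj erefl erefl))).
have h3 := to23 3 (or_intror (or_intror (conj erefl erefl))).
have n02 : m 0 <> m 2 by move/minj => /(_ erefl erefl).
have n03 : m 0 <> m 3 by move/minj => /(_ erefl erefl).
have n23 : m 2 <> m 3 by move/minj => /(_ erefl erefl).
lia.
Qed.

Lemma initseg_B_D_cx : initseg_of B_cx D_cx.
Proof.
split=> /= [x x2|x y x2 y2|x y z x2 y2 z2]; first by rewrite /dom /=; lia.
  by split=> // /andP[_ /orP[] /eqP ey]; move: y2; rewrite ey.
by split=> // /and3P[_ /eqP ey _]; move: y2; rewrite ey.
Qed.

Definition tau_cx : wdata 1 0 :=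
  wdata_of 1 0 (fun x y => (x == 0) && (y == 1)) (fun x y => (x == 0) && (y == 1))
               (fun _ _ _ => false).

Lemma wtype_of_D_cx z : z = 2 \/ z = 3 -> wtype_of D_cx 2 [:: z] = ins_wtype 2 1 1 xpred0 tau_cx.
Proof.
have pbE (P : Prop) (b : bool) : (P <-> b) -> pbool P = b.
  by move=> /eq_pbool ->; apply: pbool_bool.
have relEE a b : pbool (relE D_cx a b) = [&& a < 4, b < 4 & (a == 0) && ((b == 2) || (b == 3))].
  by apply: pbE; split=> [[/= -> -> ->]|/and3P[]].
have relLE a b : pbool (relL D_cx a b) = [&& a < 4, b < 4 & a <= b].
  by apply: pbE; split=> [[/= -> -> ->]|/and3P[]].
have relHE a b c : pbool (relH D_cx a b c) =
    [&& a < 4, b < 4, c < 4 & [&& a == 1, b == 2 & c == 3]].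
  by apply: pbE; split=> [[/= -> -> -> ->]|/and4P[]].
case=> ->; apply: wdata_ext => [x y|x y|x y w]; rewrite ?wE_of ?wL_of ?wH_of /=.
all: rewrite ?relEE ?relLE ?relHE.
all: case: x => [|[|[|x]]]; case: y => [|[|[|y]]]; try case: w => [|[|[|w]]].
all: by rewrite /= ?wE_of ?wL_of ?wH_of ?andbF.
Qed.

Section NoAmalgamation.
Variable g' : car (plus B_cx) -> car (plus B'_cx).
Hypotheses (g'_emb : lfs_emb g') (g'_f : forall x, g' (f_cx x) = f'_cx x)
           (g'_base : fixes_base g').
Variables (B3 : estr) (h : nat -> nat).
Hypotheses (h_emb : emb D_cx B3 h) (B'_B3 : initseg_of B'_cx B3).
Hypothesis h_base : forall a : 'I_(fn B_cx),
  exists b : 'I_(fn B'_cx), g' (inl a) = inl b /\ h (val a) = val b.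
Hypothesis h_cover : forall s, tuple_in_image D_cx B3 h (fn B'_cx) s ->
  forall N : nodes (fn B'_cx), typeNode B3 (fn B'_cx) s N -> exists y, g' y = inr N.

Lemma h_id a : a < 2 -> h a = a.
Proof.
move=> a2; have [b [gb /= ->]] := h_base (Ordinal a2).
have [b' [gb' /= <-]] := g'_base (Ordinal a2).
by rewrite gb in gb'; case: gb' => ->.
Qed.

Lemma h_above z : z = 2 \/ z = 3 -> 3 <= h z.
Proof.
move=> z23; case: h_emb => _ hinj _ hE _.
have dz : dom D_cx z by case: z23 => ->.
have hz_new a : a < 2 -> h z != a.
  move=> a2; have da : dom D_cx a by rewrite /dom /=; lia.
  by apply/eqP; rewrite -(h_id a2) => /(hinj z a dz da) za; case: z23 za a2 => -> <-.
have E0z : relE B3 0 (h z).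
  have E0z : relE D_cx 0 z by split=> //; case: z23 => ->.
  by have := (hE 0 z erefl dz).1 E0z; rewrite h_id.
have hz2 : h z != 2.
  apply/eqP => e; case: E0z => _ _; rewrite e.
  by case: B'_B3 => _ B'E _ => /(B'E 0 2 erefl erefl) [].
by have := hz_new 0 erefl; have := hz_new 1 erefl; move: hz2; lia.
Qed.

Lemma h_type z : z = 2 \/ z = 3 ->
  wtype_of B3 3 [:: h z] = ins_wtype 3 1 2 (xpred1 2) tau_cx.
Proof.
move=> z23; have dz : dom D_cx z by case: z23 => ->.
have s_img : tuple_in_image D_cx B3 h (fn B'_cx) [:: h z].
  by split=> // a; rewrite inE => /eqP ->; split; [exact: h_above|exists z].
have [[b|[k w]] gy] := h_cover s_img (@typeNode_wtype_of B3 3 [:: h z] erefl).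
  by have [b' [gb _]] := g'_base b; rewrite gb in gy.
have k0 := lfs_emb_level0 g'_emb gy; subst k.
have ew : w = ins_wtype 2 1 1 xpred0 tau_cx.
  rewrite (@lfs_emb_level0_wtype B_cx B'_cx 1 _ _ _ erefl g'_emb g'_base gy) -(wtype_of_D_cx z23).
  by apply: unins_wtype_of h_emb _ dz => a /= a2; split; [rewrite /dom /=; lia|exact: h_id].
move: gy; rewrite ew -[inr _]/(f_cx (inr (existT _ 0 tau_cx))) g'_f.
by move/(congr1 (fun x => if x is inr N then Some N else None))/Some_inj => e;
  exact: (esym (eq_from_Tagged e)).
Qed.

Lemma relE_2_h z : z = 2 \/ z = 3 -> relE B3 2 (h z).
Proof.
move=> z23; have := wE_ins_wtype_fresh_top (xpred1 2) (leqnn 1) (erefl : 1 + 2 = 3) tau_cx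
  (erefl : fresh 1 2 2).
by rewrite -(h_type z23) !wE_of /= => /pboolP.
Qed.

Lemma F_into_B3 : exists m, mono_F B3 m.
Proof.
have h2 := h_above (or_introl erefl); have h3 := h_above (or_intror erefl).
case: h_emb => _ hinj _ _ hH; case: B'_B3 => B3dom B3E _.
have n23 : h 2 != h 3 by apply/eqP => /(hinj 2 3 erefl erefl).
apply: (@mono_F_of B3 1 2 (h 2) (h 3)).
- by rewrite /= !inE; move: n23; lia.
- by split; [apply: B3dom|apply: B3dom|apply/(B3E 2 1)].
- exact: relE_2_h (or_introl erefl).
- exact: relE_2_h (or_intror erefl).
- by have := (hH 1 2 3 erefl erefl erefl).1 (And4 erefl erefl erefl erefl); rewrite h_id.
Qed.

End NoAmalgamation.

Theorem proposition2 : ~ tr_amalgamation Kclass.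
Proof.
move=> amalg.
have B'_B_E x y : x < fn B_cx -> y < fn B_cx -> (fE B'_cx x y <-> fE B_cx x y).
  by move=> x2 _; split=> // -[ex _]; move: x2; rewrite ex.
have [g' [[g'_emb g'_ext] g'_f g'_base]] :=
  amalg A_cx B_cx B'_cx Kclass_A_cx Kclass_B_cx Kclass_B'_cx erefl B'_B_E
    (fun _ _ _ _ _ _ => iff_refl _) f_cx f'_cx g_cx Ktype_resp_f_cx Ktype_resp_f'_cx
    Ktype_resp_g_cx fixes_base_g_cx g_f_cx.
have [B3 [h [KB3 B'_B3 [h_emb _] h_base h_cover]]] := g'_ext D_cx Kclass_D_cx initseg_B_D_cx.
exact: KB3 (F_into_B3 g'_emb g'_f g'_base h_emb B'_B3 h_base h_cover).
Qed.
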